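(* Suppose $\sigma^2>0=\lambda(\mathbb R)$ and let $q>0$. Then: (i) there exist $A_0,h_0\in(0,\infty)$ such that for all $h\in(0,h_0)$ and all $x\in\mathbb Z_h^{++}$ with $xh^2\le1$: $|\Delta^{(q)}_Z(x,h)|\le A_0\bigl[h^2(1+x)e^{\alpha_+x}+h(e^{\alpha_+x}-e^{\alpha_-x})\bigr]$; (ii) for any nested sequence $h_n\downarrow0$ ($h_n/h_{n+1}\in\mathbb N$) and any $x\in\bigcup_n\mathbb Z_{h_n}^{++}$, $$\lim_{n\to\infty}\frac{\Delta^{(q)}_Z(x,h_n)}{h_n}=-\frac12\frac{q}{\sqrt{\mu^2+2\sigma^2q}}\bigl(e^{\alpha_+x}-e^{\alpha_-x}\bigr),$$ where $\alpha_\pm=\frac{-\mu\pm\sqrt{\mu^2+2q\sigma^2}}{\sigma^2}$.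
   Context: $X$ is the Lévy process $\sigma B_t+\mu t$ ($B$ standard Brownian motion, $\sigma^2>0$), with $\psi(\beta)=\tfrac12\sigma^2\beta^2+\mu\beta$, and $\psi^h(\beta)=\mu\frac{e^{\beta h}-e^{-\beta h}}{2h}+\sigma^2\frac{e^{\beta h}+e^{-\beta h}-2}{2h^2}$. For $h>0$, $\mathbb Z_h=h\mathbb Z$, $\mathbb Z_h^{++}=\mathbb Z_h\cap(0,\infty)$; $h_\star>0$ is such that for $h\in(0,h_\star)$, $\psi^h$ is the Laplace exponent of a compound Poisson process on $\mathbb Z_h$. $\Phi(q),\Phi^h(q)$: largest roots of $\psi=q$, $\psi^h=q$ on $[0,\infty)$. $W^{(q)}$ vanishes on $(-\infty,0)$, is continuous nondecreasing on $[0,\infty)$ with Laplace transform $1/(\psi(\beta)-q)$ ($\beta>\Phi(q)$), and $Z^{(q)}(x)=1+q\int_0^xW^{(q)}(y)dy$. $W^{(q)}_h$ vanishes on $(-\infty,0)$ and on $[0,\infty)$ is the unique right-continuous function constant on each $[kh,(k+1)h)$, of exponential order, with Laplace transform $\frac{e^{\beta h}-1}{\beta h(\psi^h(\beta)-q)}$ ($\beta>\Phi^h(q)$), and $Z^{(q)}_h(x)=1+q\int_0^{\lfloor x/h\rfloor h}W^{(q)}_h(y)dy$. $\Delta^{(q)}_Z(x,h):=Z^{(q)}(x)-Z^{(q)}_h(x)$. *)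

From Stdlib Require Import Reals Lra ClassicalEpsilon.
Open Scope R_scope.

(* Laplace exponent of X = sigma B + mu t, with sigma2 = sigma^2. *)
Definition psi (sigma2 mu b : R) : R := / 2 * sigma2 * b ^ 2 + mu * b.

(* Laplace exponent of the approximating compound Poisson process on hZ. *)
Definition psih (sigma2 mu h b : R) : R :=
  mu * (exp (b * h) - exp (- (b * h))) / (2 * h)
  + sigma2 * (exp (b * h) + exp (- (b * h)) - 2) / (2 * h ^ 2).

(* Total Riemann integral: the value of RiemannInt when f is Riemann
   integrable on [a,b] (RiemannInt is proof-irrelevant), chosen by epsilon. *)
Definition Rint (f : R -> R) (a b : R) : R :=
  epsilon (inhabits 0)
    (fun I => exists pr : Riemann_integrable f a b, RiemannInt pr = I).

Definition largest_root (f : R -> R) (q Phi : R) : Prop :=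
  0 <= Phi /\ f Phi = q /\ (forall b, 0 <= b -> f b = q -> b <= Phi).

Definition laplace_is (f : R -> R) (beta L : R) : Prop :=
  (forall T, 0 <= T -> inhabited (Riemann_integrable (fun y => exp (- (beta * y)) * f y) 0 T)) /\
  (forall eps, 0 < eps -> exists T0, forall T, T0 <= T ->
     Rabs (Rint (fun y => exp (- (beta * y)) * f y) 0 T - L) < eps).

Definition is_scale_W (sigma2 mu q : R) (W : R -> R) : Prop :=
  (forall x, x < 0 -> W x = 0) /\
  (forall x, 0 <= x -> forall eps, 0 < eps -> exists delta, 0 < delta /\
     forall y, 0 <= y -> Rabs (y - x) < delta -> Rabs (W y - W x) < eps) /\
  (forall x y, 0 <= x -> x <= y -> W x <= W y) /\
  (exists Phi, largest_root (psi sigma2 mu) q Phi /\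
     forall beta, Phi < beta -> laplace_is W beta (/ (psi sigma2 mu beta - q))).

Definition is_scale_Wh (sigma2 mu q h : R) (Wh : R -> R) : Prop :=
  (forall x, x < 0 -> Wh x = 0) /\
  (forall (k : nat) x, INR k * h <= x < (INR k + 1) * h -> Wh x = Wh (INR k * h)) /\
  (exists C c, forall x, 0 <= x -> Rabs (Wh x) <= C * exp (c * x)) /\
  (exists Phih, largest_root (psih sigma2 mu h) q Phih /\
     forall beta, Phih < beta ->
       laplace_is Wh beta
         ((exp (beta * h) - 1) / (beta * h * (psih sigma2 mu h beta - q)))).

Definition Zq (q : R) (W : R -> R) (x : R) : R := 1 + q * Rint W 0 x.

Definition Zqh (q h : R) (Wh : R -> R) (x : R) : R :=
  1 + q * Rint Wh 0 (IZR (Int_part (x / h)) * h).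

Definition DeltaZ (q : R) (W Wh : R -> R) (x h : R) : R :=
  Zq q W x - Zqh q h Wh x.

Definition alpha_plus (sigma2 mu q : R) : R :=
  (- mu + sqrt (mu ^ 2 + 2 * q * sigma2)) / sigma2.
Definition alpha_minus (sigma2 mu q : R) : R :=
  (- mu - sqrt (mu ^ 2 + 2 * q * sigma2)) / sigma2.

From Stdlib Require Import Reals Lra Lia ZArith Arith ClassicalEpsilon.
From Coquelicot Require Import Coquelicot.
Open Scope R_scope.

(* Proof strategy.  Both scale functions are computed in closed form, after
   which the proposition is an explicit asymptotic expansion.

   1. Continuous scale function.  [W] is pinned down by its Laplace transform
      [1 / (psi - q)]: a Lerch-type uniqueness theorem (proved with the
      Bernstein kernel [1 - (1 - exp (- m y)) ^ N], which approximates the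
      indicator of [[0, Y]]) shows [W = (exp (alpha_plus y) - exp (alpha_minus y)) / Dd],
      so [Z x] is explicit.
   2. Discrete scale function.  On the grid, the Laplace transform of the step
      function [Wh] is a power series in [z = exp (- beta h)] with sum
      [2 h / Pz z], a quadratic with roots [1 / rho_plus], [1 / rho_minus];
      uniqueness of power series coefficients gives
      [Wh (k h) = (rho_plus^(k+1) - rho_minus^(k+1)) / Dh], so [Zh] is explicit.
   3. Error analysis.  From [psih - psi = O(h^2)] we get
      [rho_plus = exp (alpha_plus h) + O(h^3)], [rho_minus = exp (alpha_minus h) + O(h^3)]
      and [v1 = u1 + h / (2 Dd) + O(h^2)] for the coefficients of the closed
      forms; hence [DeltaZ (k h) h = - q h (e^(a x) - e^(b x)) / (2 Dd)
      + O(h^2 (1 + x) e^(a x))] for [x = k h], [x h^2 <= 1].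
   Part (i) of the proposition is this expansion with the first-order term
   bounded, part (ii) follows by dividing by [h] along the nested grids. *)

Lemma Rint_eq_RInt f a b : ex_RInt f a b -> Rint f a b = RInt f a b.
Proof.
  intro H. unfold Rint.
  set (P := fun I => exists pr : Riemann_integrable f a b, RiemannInt pr = I).
  assert (HP : exists I, P I).
  { exists (RiemannInt (ex_RInt_Reals_0 f a b H)). exists (ex_RInt_Reals_0 f a b H). reflexivity. }
  destruct (epsilon_spec (inhabits 0) P HP) as [pr Hpr].
  rewrite <- Hpr. symmetry. apply RInt_Reals.
Qed.

Definition C0 (g : R -> R) := forall y, continuous g y.

Lemma C0_smooth f : (forall y, ex_derive f y) -> C0 f.
Proof. intros H y. apply (ex_derive_continuous (K:=R_AbsRing) (V:=R_NormedModule)). apply H. Qed.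
Lemma C0_const c : C0 (fun _ => c).
Proof. intro y. apply continuous_const. Qed.
Lemma C0_mult f g : C0 f -> C0 g -> C0 (fun y => f y * g y).
Proof. intros Hf Hg y. exact (continuous_mult f g y (Hf y) (Hg y)). Qed.
Lemma C0_minus f g : C0 f -> C0 g -> C0 (fun y => f y - g y).
Proof. intros Hf Hg y. exact (continuous_minus f g y (Hf y) (Hg y)). Qed.

Lemma C0_ex_RInt g a b : C0 g -> ex_RInt g a b.
Proof. intros H. apply (ex_RInt_continuous (V:=R_CompleteNormedModule)). intros; apply H. Qed.

Ltac smooth := apply C0_smooth; intro; auto_derive; auto.
Ltac smooth_int := apply C0_ex_RInt; smooth.

(** Coquelicot states integral identities in a normed-module type; [toR]
    exposes the underlying real equality to [ring] and [field]. *)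
Ltac toR := match goal with |- @eq _ ?x ?y => change (@eq R x y) end.

Lemma RInt_plusR f g a b : ex_RInt f a b -> ex_RInt g a b ->
  RInt (fun x => f x + g x) a b = RInt f a b + RInt g a b.
Proof. intros. exact (RInt_plus f g a b H H0). Qed.
Lemma RInt_minusR f g a b : ex_RInt f a b -> ex_RInt g a b ->
  RInt (fun x => f x - g x) a b = RInt f a b - RInt g a b.
Proof. intros. exact (RInt_minus f g a b H H0). Qed.
Lemma RInt_scalR f c a b : ex_RInt f a b ->
  RInt (fun x => c * f x) a b = c * RInt f a b.
Proof. intros. exact (RInt_scal f a b c H). Qed.
Lemma RInt_ChaslesR f a b c : ex_RInt f a b -> ex_RInt f b c ->
  RInt f a b + RInt f b c = RInt f a c.
Proof. intros. exact (RInt_Chasles f a b c H H0). Qed.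
Lemma RInt_constR c a b : RInt (fun _ => c) a b = (b - a) * c.
Proof. exact (RInt_const a b c). Qed.
Lemma RInt_extR (f g : R -> R) a b :
  (forall x, Rmin a b < x < Rmax a b -> f x = g x) -> RInt f a b = RInt g a b.
Proof. intros H. apply RInt_ext. exact H. Qed.

Lemma RInt_abs_bound g G a b : a <= b -> C0 g -> C0 G ->
  (forall y, a <= y <= b -> Rabs (g y) <= G y) -> Rabs (RInt g a b) <= RInt G a b.
Proof.
  intros Hab Hg HG Hb.
  eapply Rle_trans. apply abs_RInt_le; auto. apply C0_ex_RInt; auto.
  apply RInt_le; auto.
  - apply C0_ex_RInt. intro y. apply (continuous_comp g Rabs y (Hg y)).
    apply continuity_pt_filterlim. apply Rcontinuity_abs.
  - apply C0_ex_RInt; auto.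
  - intros. apply Hb. lra.
Qed.

Lemma RInt_abs_const g M a b : a <= b -> C0 g ->
  (forall y, a <= y <= b -> Rabs (g y) <= M) -> Rabs (RInt g a b) <= (b - a) * M.
Proof. intros. rewrite <- RInt_constR. apply RInt_abs_bound; auto. apply C0_const. Qed.

Lemma RInt_expc c a b : c <> 0 ->
  RInt (fun y => exp (c * y)) a b = exp (c * b) / c - exp (c * a) / c.
Proof.
  intros Hc. apply is_RInt_unique.
  apply (is_RInt_derive (V:=R_CompleteNormedModule) (fun y => exp (c * y) / c)).
  - intros. auto_derive; auto. field; auto.
  - intros. apply C0_smooth. intro; auto_derive; auto.
Qed.

Lemma abs_four_terms A B C E : Rabs (A - B - C - E) <= Rabs A + Rabs B + Rabs C + Rabs E.
Proof.
  unfold Rminus. eapply Rle_trans. apply Rabs_triang.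
  eapply Rle_trans. apply Rplus_le_compat_r, Rabs_triang.
  eapply Rle_trans. apply Rplus_le_compat_r, Rplus_le_compat_r, Rabs_triang.
  rewrite !Rabs_Ropp. lra.
Qed.

Lemma exp_le x y : x <= y -> exp x <= exp y.
Proof. intros [H|H]. left; apply exp_increasing; auto. subst; lra. Qed.

Lemma exp_powR x n : exp x ^ n = exp (INR n * x).
Proof.
  induction n. simpl. rewrite Rmult_0_l, exp_0; auto.
  rewrite S_INR, <- tech_pow_Rmult, IHn, <- exp_plus. f_equal. ring.
Qed.

Lemma exp_neg_le_inv u : 0 < u -> exp (- u) <= / u.
Proof.
  intros Hu. rewrite exp_Ropp. apply Rinv_le_contravar; auto.
  pose proof (exp_ineq1_le u). lra.
Qed.

Lemma exp_small k eps : 0 < k -> 0 < eps ->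
  exists T0, forall T, T0 <= T -> exp (- (k * T)) < eps.
Proof.
  intros Hk He. exists (/ (k * eps) + 1). intros T HT.
  assert (0 < / (k * eps)) by (apply Rinv_0_lt_compat; nra).
  assert (0 < k * T) by nra.
  eapply Rle_lt_trans. apply exp_neg_le_inv; auto.
  apply Rmult_lt_reg_l with (k * T); auto. rewrite Rinv_r by lra.
  assert (k * T >= k * (/ (k * eps) + 1)) by nra.
  assert (k * (/ (k * eps) + 1) * eps = 1 + k * eps) by (field; lra). nra.
Qed.

Lemma pow_exp_bound t n : 0 <= t -> (1 + t) ^ n <= exp (INR n * t).
Proof. intros Ht. rewrite <- exp_powR. apply pow_incr. split. lra. apply exp_ineq1_le. Qed.

Lemma bernoulli t N : 0 <= t <= 1 -> 1 - INR N * t <= (1 - t) ^ N.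
Proof.
  intros Ht. induction N. simpl; lra.
  rewrite S_INR. simpl. assert (0 <= 1 - t) by lra.
  pose proof (pos_INR N).
  assert (0 <= (1 - t) * ((1 - t) ^ N - (1 - INR N * t))) by (apply Rmult_le_pos; lra).
  assert (0 <= INR N * (t * t)) by (apply Rmult_le_pos; nra). nra.
Qed.

Lemma pow_le_exp t N : 0 <= t <= 1 -> (1 - t) ^ N <= exp (- (INR N * t)).
Proof.
  intros Ht. replace (- (INR N * t)) with (INR N * (- t)) by ring. rewrite <- exp_powR.
  apply pow_incr. split. lra. pose proof (exp_ineq1_le (- t)). lra.
Qed.

Lemma nat_above M : exists m : nat, (1 <= m)%nat /\ M < INR m.
Proof.
  destruct (archimed M) as [H1 _].
  exists (S (Z.to_nat (up M))). split. lia.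
  rewrite S_INR. destruct (Z.le_gt_cases 0 (up M)).
  - rewrite INR_IZR_INZ, Z2Nat.id; auto. lra.
  - assert (IZR (up M) < 0). { apply IZR_lt. lia. } pose proof (pos_INR (Z.to_nat (up M))). lra.
Qed.

Lemma nat_between x : 0 <= x -> exists N : nat, x <= INR N <= x + 1.
Proof.
  intros Hx. destruct (archimed x) as [H1 H2].
  exists (Z.to_nat (up x)). rewrite INR_IZR_INZ, Z2Nat.id. lra.
  apply le_IZR. lra.
Qed.

Definition improper_int_zero (g : R -> R) :=
  forall eps, 0 < eps -> exists T0, forall T, T0 <= T -> Rabs (RInt g 0 T) < eps.

Lemma improper_int_zero_ext g g' :
  (forall y, g y = g' y) -> improper_int_zero g -> improper_int_zero g'.
Proof.
  intros H Hg eps He. destruct (Hg eps He) as [T0 HT]. exists T0. intros T HT'.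
  rewrite (RInt_ext g' g). apply HT; auto. intros; rewrite H; auto.
Qed.

Lemma improper_int_zero_0 : improper_int_zero (fun _ => 0).
Proof. intros eps He. exists 0. intros. rewrite RInt_constR, Rmult_0_r, Rabs_R0. auto. Qed.

Lemma improper_int_zero_plus g1 g2 : C0 g1 -> C0 g2 ->
  improper_int_zero g1 -> improper_int_zero g2 -> improper_int_zero (fun y => g1 y + g2 y).
Proof.
  intros C1 C2 H1 H2 eps He.
  destruct (H1 (eps/2)) as [T1 HT1]. lra. destruct (H2 (eps/2)) as [T2 HT2]. lra.
  exists (Rmax T1 T2). intros T HT. rewrite RInt_plusR by (apply C0_ex_RInt; auto).
  eapply Rle_lt_trans. apply Rabs_triang.
  assert (A := HT1 T ltac:(eapply Rle_trans; [apply Rmax_l|exact HT])).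
  assert (B := HT2 T ltac:(eapply Rle_trans; [apply Rmax_r|exact HT])). lra.
Qed.

Lemma improper_int_zero_scal c g : C0 g ->
  improper_int_zero g -> improper_int_zero (fun y => c * g y).
Proof.
  intros Cg H eps He.
  destruct (H (eps / (Rabs c + 1))) as [T1 HT1].
  { apply Rdiv_lt_0_compat; auto. pose proof (Rabs_pos c); lra. }
  exists T1. intros T HT. rewrite RInt_scalR by (apply C0_ex_RInt; auto).
  rewrite Rabs_mult. specialize (HT1 T HT).
  pose proof (Rabs_pos c). pose proof (Rabs_pos (RInt g 0 T)).
  apply Rle_lt_trans with ((Rabs c + 1) * Rabs (RInt g 0 T)). nra.
  apply Rmult_lt_compat_l with (r := Rabs c + 1) in HT1; [|lra].
  replace ((Rabs c + 1) * (eps / (Rabs c + 1))) with eps in HT1 by (field; lra). lra.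
Qed.

(** The Bernstein-type kernel [1 - (1 - exp (- m y)) ^ N], a polynomial
    without constant term in [exp (- m y)]. *)
Definition kernel_base (m : nat) (y : R) := exp (- (INR m * y)).
Definition kernel (m N : nat) (y : R) := 1 - (1 - kernel_base m y) ^ N.

Section KernelTransform.
Variable f : R -> R.
Hypothesis Cf : C0 f.
Hypothesis Hlap : forall m : nat, (1 <= m)%nat ->
  improper_int_zero (fun y => exp (- (INR m * y)) * f y).

Lemma improper_int_zero_moment (m : nat) : (1 <= m)%nat -> forall n j, (1 <= j)%nat ->
  improper_int_zero (fun y => exp (- (INR m * y)) ^ j * (1 - exp (- (INR m * y))) ^ n * f y).
Proof.
  intros Hm n. induction n; intros j Hj.
  - apply improper_int_zero_ext with (g := fun y => exp (- (INR (j * m) * y)) * f y).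
    + intros y. rewrite exp_powR, mult_INR. simpl.
      replace (INR j * - (INR m * y)) with (- (INR j * INR m * y)) by ring. ring.
    + apply Hlap. lia.
  - (* t^j (1-t)^(n+1) = t^j (1-t)^n - t^(j+1) (1-t)^n *)
    apply improper_int_zero_ext with (g := fun y =>
       exp (- (INR m * y)) ^ j * (1 - exp (- (INR m * y))) ^ n * f y +
       (-1) * (exp (- (INR m * y)) ^ (S j) * (1 - exp (- (INR m * y))) ^ n * f y)).
    + intros y. simpl. ring.
    + assert (CC : forall jj,
        C0 (fun y => exp (- (INR m * y)) ^ jj * (1 - exp (- (INR m * y))) ^ n * f y)).
      { intro jj. apply C0_mult; [smooth | exact Cf]. }
      apply improper_int_zero_plus; [apply CC | apply C0_mult; [apply C0_const | apply CC]
        | apply IHn; lia | apply improper_int_zero_scal; [apply CC | apply IHn; lia]].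
Qed.

Lemma improper_int_zero_kernel (m : nat) : (1 <= m)%nat -> forall N,
  improper_int_zero (fun y => kernel m N y * f y).
Proof.
  intros Hm N. unfold kernel, kernel_base. induction N.
  - apply improper_int_zero_ext with (g := fun _ => 0).
    intros; simpl; ring. apply improper_int_zero_0.
  - apply improper_int_zero_ext with (g := fun y => (1 - (1 - exp (- (INR m * y))) ^ N) * f y +
        exp (- (INR m * y)) ^ 1 * (1 - exp (- (INR m * y))) ^ N * f y).
    + intros; simpl; ring.
    + apply improper_int_zero_plus; try (apply C0_mult; [smooth | exact Cf]).
      * exact IHN.
      * apply improper_int_zero_moment; auto.
Qed.
End KernelTransform.

(** The kernel with [N ~ exp (m Y)] is a
    smooth approximation of the indicator of [[0, Y]]: up to an error
    [exp (- m delta)] it equals 1 on [[0, Y - delta]] and 0 beyond [Y + delta]. *)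
Section Kernel.
Variables (m N : nat) (Y delta : R).
Hypothesis Hdelta : 0 < delta.
Hypothesis HN : exp (INR m * Y) <= INR N <= exp (INR m * Y) + 1.

Lemma kernel_base_range y : 0 <= y -> 0 < kernel_base m y <= 1.
Proof.
  intros Hy. unfold kernel_base. split. apply exp_pos. rewrite <- exp_0. apply exp_le.
  pose proof (pos_INR m). nra.
Qed.

Lemma kernel_range y : 0 <= y -> 0 <= kernel m N y <= 1.
Proof.
  intros Hy. unfold kernel. pose proof (kernel_base_range y Hy). split.
  - assert ((1 - kernel_base m y) ^ N <= 1 ^ N) by (apply pow_incr; lra). rewrite pow1 in H0. lra.
  - assert (0 <= (1 - kernel_base m y) ^ N) by (apply pow_le; lra). lra.
Qed.

Lemma kernel_tail y : Y + delta <= y -> 0 <= Y -> kernel m N y <= 2 * exp (- (INR m * delta)).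
Proof.
  intros Hy HY. unfold kernel. assert (Hy0 : 0 <= y) by lra.
  pose proof (kernel_base_range y Hy0) as Hty. pose proof (bernoulli (kernel_base m y) N ltac:(lra)).
  assert (1 <= exp (INR m * Y)) by (rewrite <- exp_0; apply exp_le; pose proof (pos_INR m); nra).
  assert (INR N * kernel_base m y <= 2 * exp (- (INR m * delta))).
  { apply Rle_trans with (2 * exp (INR m * Y) * exp (- (INR m * y))).
    { assert (0 < kernel_base m y) by lra. fold (kernel_base m y).
      apply Rle_trans with ((exp (INR m * Y) + 1) * kernel_base m y).
      apply Rmult_le_compat_r; lra. apply Rmult_le_compat_r; lra. }
    rewrite Rmult_assoc, <- exp_plus. apply Rmult_le_compat_l. lra. apply exp_le.
    pose proof (pos_INR m). nra. }
  lra.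
Qed.

Lemma kernel_head y : 0 <= y <= Y - delta -> 1 - kernel m N y <= exp (- (INR m * delta)).
Proof.
  intros Hy. unfold kernel.
  replace (1 - (1 - (1 - kernel_base m y) ^ N)) with ((1 - kernel_base m y) ^ N) by ring.
  pose proof (kernel_base_range y ltac:(lra)) as Ht. pose proof (exp_pos (INR m * Y)).
  eapply Rle_trans. apply pow_le_exp. lra.
  eapply Rle_trans. apply exp_neg_le_inv.
  { apply Rmult_lt_0_compat. lra. apply Ht. }
  rewrite <- Rinv_inv. apply Rinv_le_contravar.
  { apply Rinv_0_lt_compat, exp_pos. }
  rewrite <- exp_Ropp, Ropp_involutive.
  apply Rle_trans with (exp (INR m * Y) * kernel_base m y).
  2:{ apply Rmult_le_compat_r. left; apply Ht. lra. }
  unfold kernel_base. rewrite <- exp_plus. apply exp_le. pose proof (pos_INR m). nra.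
Qed.

Lemma kernel_C0 : C0 (kernel m N).
Proof. unfold kernel, kernel_base. smooth. Qed.
End Kernel.

Lemma RInt_kernel_split f K Y delta T : C0 f -> C0 K ->
  RInt f 0 Y = RInt (fun y => K y * f y) 0 T
     - RInt (fun y => (K y - 1) * f y) 0 (Y - delta)
     - RInt (fun y => K y * f y) (Y - delta) (Y + delta)
     - RInt (fun y => K y * f y) (Y + delta) T + RInt f (Y - delta) Y.
Proof.
  intros Cf CK.
  assert (CKf : C0 (fun y => K y * f y)) by (apply C0_mult; auto).
  rewrite <- (RInt_ChaslesR _ 0 (Y - delta) Y) by (apply C0_ex_RInt; auto).
  rewrite <- (RInt_ChaslesR (fun y => K y * f y) 0 (Y + delta) T) by (apply C0_ex_RInt; auto).
  rewrite <- (RInt_ChaslesR (fun y => K y * f y) 0 (Y - delta) (Y + delta)) by (apply C0_ex_RInt; auto).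
  assert (E : RInt (fun y => (K y - 1) * f y) 0 (Y - delta) =
     RInt (fun y => K y * f y) 0 (Y - delta) - RInt f 0 (Y - delta)).
  { rewrite <- RInt_minusR by (apply C0_ex_RInt; auto). apply RInt_extR. intros x _. ring. }
  rewrite E. toR. ring.
Qed.

Lemma RInt_exp_decay g c A T : C0 g -> 0 <= A <= T ->
  (forall y, A <= y <= T -> Rabs (g y) <= c * exp (- y)) -> Rabs (RInt g A T) <= c.
Proof.
  intros Cg HAT Hg.
  assert (Hc : 0 <= c).
  { specialize (Hg A ltac:(lra)). pose proof (Rabs_pos (g A)). pose proof (exp_pos (- A)). nra. }
  eapply Rle_trans.
  { apply RInt_abs_bound with (G := fun y => c * exp ((-1) * y)); try lra; auto. smooth.
    intros y Hy. replace ((-1) * y) with (- y) by ring. auto. }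
  rewrite RInt_scalR by smooth_int. rewrite RInt_expc by lra.
  pose proof (exp_pos ((-1) * T)).
  assert (exp ((-1) * A) <= 1) by (rewrite <- exp_0; apply exp_le; lra).
  replace (exp (-1 * T) / -1 - exp (-1 * A) / -1) with (exp (-1 * A) - exp (-1 * T)) by (field; lra).
  nra.
Qed.

Lemma kernel_approximation f K C Y delta T e : C0 f -> C0 K ->
  (forall y, 0 <= y -> Rabs (f y) <= C * exp (- y)) ->
  (forall y, 0 <= y -> 0 <= K y <= 1) ->
  (forall y, 0 <= y <= Y - delta -> 1 - K y <= e) ->
  (forall y, Y + delta <= y -> K y <= 2 * e) ->
  0 < delta <= Y / 2 -> Y + delta <= T ->
  Rabs (RInt f 0 Y) <=
  Rabs (RInt (fun y => K y * f y) 0 T) + e * C * Y + 3 * delta * C + 2 * e * C.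
Proof.
  intros Cf CK Hb HK01 HKlo HKhi Hd HT.
  assert (HC : 0 <= C).
  { specialize (Hb 0 (Rle_refl 0)). rewrite Ropp_0, exp_0 in Hb.
    pose proof (Rabs_pos (f 0)). lra. }
  assert (He : 0 <= e) by (pose proof (HKlo 0 ltac:(lra)); pose proof (HK01 0 (Rle_refl 0)); lra).
  assert (HbC : forall y, 0 <= y -> Rabs (f y) <= C).
  { intros y Hy. eapply Rle_trans. apply Hb; auto.
    assert (exp (- y) <= 1) by (rewrite <- exp_0; apply exp_le; lra). nra. }
  assert (CKf : C0 (fun y => K y * f y)) by (apply C0_mult; auto).
  assert (CK1f : C0 (fun y => (K y - 1) * f y)) by (apply C0_mult; auto; apply C0_minus; auto; apply C0_const).
  assert (B1 : Rabs (RInt (fun y => (K y - 1) * f y) 0 (Y - delta)) <= (Y - delta - 0) * (e * C)).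
  { apply RInt_abs_const; auto. lra. intros y Hy. rewrite Rabs_mult.
    assert (Rabs (K y - 1) <= e).
    { rewrite Rabs_minus_sym, Rabs_pos_eq. apply HKlo; lra. pose proof (HK01 y (proj1 Hy)); lra. }
    apply Rmult_le_compat; auto using Rabs_pos. apply HbC. lra. }
  assert (B2 : Rabs (RInt (fun y => K y * f y) (Y - delta) (Y + delta)) <= (Y + delta - (Y - delta)) * C).
  { apply RInt_abs_const; auto. lra. intros y Hy. rewrite Rabs_mult.
    assert (0 <= y) by lra. pose proof (HK01 y H). rewrite Rabs_pos_eq by lra.
    pose proof (HbC y H). pose proof (Rabs_pos (f y)). nra. }
  assert (B3 : Rabs (RInt f (Y - delta) Y) <= (Y - (Y - delta)) * C).
  { apply RInt_abs_const; auto. lra. intros y Hy. apply HbC. lra. }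
  assert (B4 : Rabs (RInt (fun y => K y * f y) (Y + delta) T) <= 2 * e * C).
  { apply RInt_exp_decay; auto. lra. intros y Hy. rewrite Rabs_mult.
    assert (0 <= y) by lra. pose proof (HK01 y H).
    rewrite (Rabs_pos_eq (K y)) by lra. pose proof (HKhi y (proj1 Hy)).
    pose proof (Hb y H). pose proof (Rabs_pos (f y)). pose proof (exp_pos (- y)).
    apply Rle_trans with (2 * e * (C * exp (- y))). apply Rmult_le_compat; lra. lra. }
  rewrite (RInt_kernel_split f K Y delta T Cf CK).
  eapply Rle_trans. apply Rabs_triang. eapply Rle_trans. apply Rplus_le_compat_r, abs_four_terms.
  assert (0 <= e * C) by (apply Rmult_le_pos; lra).
  assert ((Y - delta - 0) * (e * C) <= e * C * Y) by nra.
  lra.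
Qed.

Lemma lerch_integral_zero f C Y : C0 f ->
  (forall y, 0 <= y -> Rabs (f y) <= C * exp (- y)) ->
  (forall m : nat, (1 <= m)%nat -> improper_int_zero (fun y => exp (- (INR m * y)) * f y)) ->
  0 < Y -> RInt f 0 Y = 0.
Proof.
  intros Cf Hb Hlap HY.
  assert (HC : 0 <= C).
  { specialize (Hb 0 (Rle_refl 0)). rewrite Ropp_0, exp_0 in Hb. pose proof (Rabs_pos (f 0)). lra. }
  apply Rabs_eq_0, Rle_antisym; [|apply Rabs_pos].
  apply le_epsilon. intros eps Heps.
  set (delta := Rmin (Y / 2) (eps / (8 * (C + 1)))).
  assert (Hd : 0 < delta) by (apply Rmin_pos; [lra | apply Rdiv_lt_0_compat; lra]).
  assert (HdY : delta <= Y / 2) by apply Rmin_l.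
  assert (HdC : delta * C <= eps / 8).
  { assert (delta <= eps / (8 * (C + 1))) by apply Rmin_r.
    apply Rle_trans with (eps / (8 * (C + 1)) * (C + 1)). nra. right. field. lra. }
  (* choose m so large that exp (- m delta) (C Y + 2 C) < eps / 4 *)
  set (B := C * (Y + 2) + 1).
  destruct (nat_above (4 * B / (eps * delta))) as [m [Hm1 Hm]].
  set (em := exp (- (INR m * delta))).
  assert (Hem : em * B < eps / 4).
  { assert (0 < INR m * delta) by (apply Rmult_lt_0_compat; auto; apply lt_0_INR; lia).
    pose proof (exp_neg_le_inv (INR m * delta) H) as E. fold em in E.
    assert (4 * B / (eps * delta) * delta < INR m * delta) by (apply Rmult_lt_compat_r; auto).
    replace (4 * B / (eps * delta) * delta) with (4 * B / eps) in H0 by (field; lra).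
    assert (0 < B) by (unfold B; nra).
    apply Rle_lt_trans with (/ (INR m * delta) * B). apply Rmult_le_compat_r; lra.
    apply Rmult_lt_reg_l with (INR m * delta); auto.
    rewrite <- Rmult_assoc, Rinv_r by lra.
    apply Rmult_lt_reg_l with (4 / eps). apply Rdiv_lt_0_compat; lra.
    replace (4 / eps * (1 * B)) with (4 * B / eps) by (field; lra).
    replace (4 / eps * (INR m * delta * (eps / 4))) with (INR m * delta) by (field; lra). lra. }
  destruct (nat_between (exp (INR m * Y))) as [N HN]. { left; apply exp_pos. }
  destruct (improper_int_zero_kernel f Cf Hlap m Hm1 N (eps / 4)) as [T0 HT0]. lra.
  set (T := Rmax T0 (Y + delta)).
  pose proof (HT0 T (Rmax_l _ _)) as HKT.
  pose proof (kernel_approximation f (kernel m N) C Y delta T em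
    Cf (kernel_C0 m N) Hb (kernel_range m N) (kernel_head m N Y delta HN)
    (fun y Hy => kernel_tail m N Y delta Hd HN y Hy ltac:(lra)) ltac:(lra) (Rmax_r _ _)).
  assert (0 < em) by apply exp_pos.
  assert (em * C * Y + 2 * em * C <= em * B) by (unfold B; nra).
  lra.
Qed.

Lemma zero_of_integrals_zero f : C0 f ->
  (forall Y, 0 < Y -> RInt f 0 Y = 0) -> forall Y, 0 < Y -> f Y = 0.
Proof.
  intros Cf H Y HY.
  assert (D1 : is_derive (fun b => RInt f 0 b) Y (f Y)).
  { apply (is_derive_RInt f (fun b => RInt f 0 b) 0 Y).
    - apply filter_forall. intros b. apply (RInt_correct (V:=R_CompleteNormedModule)).
      apply C0_ex_RInt; auto.
    - apply Cf. }
  assert (D2 : is_derive (fun b => RInt f 0 b) Y 0).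
  { apply is_derive_ext_loc with (f := fun _ => 0).
    - apply locally_interval with (a := Finite 0) (b := p_infty). simpl; auto. simpl; auto.
      intros y Hy _. simpl in Hy. rewrite H; auto.
    - apply (is_derive_const (K:=R_AbsRing) (V:=R_NormedModule)). }
  apply is_derive_unique in D1. apply is_derive_unique in D2. congruence.
Qed.

Definition Dd s mu q := sqrt (mu ^ 2 + 2 * q * s).

Section Roots.
Variables s mu q : R.
Hypothesis Hs : 0 < s.
Hypothesis Hq : 0 < q.

Lemma Dd_sq : Dd s mu q * Dd s mu q = mu ^ 2 + 2 * q * s.
Proof. unfold Dd. apply sqrt_sqrt. nra. Qed.
Lemma Dd_pos : 0 < Dd s mu q.
Proof. unfold Dd. apply sqrt_lt_R0. nra. Qed.
Lemma Dd_gt_mu : Rabs mu < Dd s mu q.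
Proof.
  pose proof Dd_sq. pose proof Dd_pos. pose proof (Rabs_pos mu).
  assert (Rabs mu * Rabs mu = mu ^ 2)
    by (rewrite <- Rabs_mult; simpl; rewrite Rmult_1_r; apply Rabs_pos_eq; nra).
  nra.
Qed.
Lemma alpha_plus_pos : 0 < alpha_plus s mu q.
Proof.
  unfold alpha_plus. pose proof Dd_gt_mu. fold (Dd s mu q).
  apply Rdiv_lt_0_compat; auto. pose proof (Rle_abs mu). lra.
Qed.
Lemma alpha_minus_neg : alpha_minus s mu q < 0.
Proof.
  unfold alpha_minus. pose proof Dd_gt_mu. fold (Dd s mu q).
  assert (0 < (mu + Dd s mu q) / s).
  { apply Rdiv_lt_0_compat; auto. pose proof (Rle_abs (-mu)). rewrite Rabs_Ropp in H0. lra. }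
  replace ((- mu - Dd s mu q) / s) with (- ((mu + Dd s mu q) / s)) by (field; lra). lra.
Qed.
Lemma alpha_diff : alpha_plus s mu q - alpha_minus s mu q = 2 * Dd s mu q / s.
Proof. unfold alpha_plus, alpha_minus, Dd. field. lra. Qed.
Lemma alpha_prod : alpha_plus s mu q * alpha_minus s mu q = - 2 * q / s.
Proof.
  unfold alpha_plus, alpha_minus. fold (Dd s mu q). pose proof Dd_sq.
  replace ((- mu + Dd s mu q) / s * ((- mu - Dd s mu q) / s))
    with ((mu * mu - Dd s mu q * Dd s mu q) / (s * s)) by (field; lra).
  rewrite H. field. lra.
Qed.
Lemma psi_factor b :
  psi s mu b - q = s / 2 * (b - alpha_plus s mu q) * (b - alpha_minus s mu q).
Proof.
  unfold psi. pose proof alpha_prod.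
  assert (alpha_plus s mu q + alpha_minus s mu q = - 2 * mu / s)
    by (unfold alpha_plus, alpha_minus; field; lra).
  replace (s / 2 * (b - alpha_plus s mu q) * (b - alpha_minus s mu q)) with
    (s / 2 * (b * b - (alpha_plus s mu q + alpha_minus s mu q) * b
              + alpha_plus s mu q * alpha_minus s mu q)) by ring.
  rewrite H, H0. field. lra.
Qed.
Lemma psi_alpha_plus : psi s mu (alpha_plus s mu q) = q.
Proof. pose proof (psi_factor (alpha_plus s mu q)). rewrite Rminus_diag, Rmult_0_r, Rmult_0_l in H. lra. Qed.
Lemma psi_alpha_minus : psi s mu (alpha_minus s mu q) = q.
Proof. pose proof (psi_factor (alpha_minus s mu q)). rewrite Rminus_diag, Rmult_0_r in H. lra. Qed.
End Roots.

Definition Wst s mu q y :=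
  (exp (alpha_plus s mu q * y) - exp (alpha_minus s mu q * y)) / Dd s mu q.

Section Candidate.
Variables s mu q : R.
Hypothesis Hs : 0 < s.
Hypothesis Hq : 0 < q.
Let a := alpha_plus s mu q.
Let b := alpha_minus s mu q.
Let D := Dd s mu q.

Lemma C0_Wst : C0 (Wst s mu q).
Proof. unfold Wst. smooth. Qed.

Lemma RInt_Wst_laplace beta T : a < beta ->
  RInt (fun y => exp (- (beta * y)) * Wst s mu q y) 0 T =
  (exp ((a - beta) * T) / (a - beta) - exp ((b - beta) * T) / (b - beta)
    - (1 / (a - beta) - 1 / (b - beta))) / D.
Proof.
  intros Hb. pose proof (alpha_plus_pos s mu q Hs Hq). pose proof (alpha_minus_neg s mu q Hs Hq).
  fold a b in H, H0. pose proof (Dd_pos s mu q Hs Hq). fold D in H1.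
  rewrite (RInt_extR _ (fun y => / D * (exp ((a - beta) * y) - exp ((b - beta) * y)))).
  2:{ intros y _. unfold Wst. fold a b D.
      replace ((a - beta) * y) with (a * y + - (beta * y)) by ring.
      replace ((b - beta) * y) with (b * y + - (beta * y)) by ring. rewrite !exp_plus. field. lra. }
  rewrite RInt_scalR, RInt_minusR by smooth_int. rewrite !RInt_expc by lra.
  rewrite !Rmult_0_r, exp_0. toR. field. repeat split; lra.
Qed.

Lemma Wst_laplace beta : a < beta -> forall eps, 0 < eps -> exists T0, forall T, T0 <= T ->
  Rabs (RInt (fun y => exp (- (beta * y)) * Wst s mu q y) 0 T - / (psi s mu beta - q)) < eps.
Proof.
  intros Hb eps He. pose proof (alpha_plus_pos s mu q Hs Hq). pose proof (alpha_minus_neg s mu q Hs Hq).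
  fold a b in H, H0. pose proof (Dd_pos s mu q Hs Hq). fold D in H1.
  destruct (exp_small (beta - a) (eps * (beta - a) * D / 2)) as [T1 HT1]. lra.
  { apply Rdiv_lt_0_compat. apply Rmult_lt_0_compat; [apply Rmult_lt_0_compat|]; lra. lra. }
  exists (Rmax T1 0). intros T HT. rewrite RInt_Wst_laplace by auto.
  assert (T1 <= T) by (eapply Rle_trans; [apply Rmax_l|exact HT]).
  assert (0 <= T) by (eapply Rle_trans; [apply Rmax_r|exact HT]).
  assert (Econst : - (1 / (a - beta) - 1 / (b - beta)) / D = / (psi s mu beta - q)).
  { rewrite psi_factor by auto. fold a b.
    assert (a - b = 2 * D / s) by (unfold a, b, D; apply alpha_diff; lra).
    replace D with (s * (a - b) / 2) by (rewrite H4; field; lra).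
    field. repeat split; lra. }
  set (e1 := exp ((a - beta) * T)). set (e2 := exp ((b - beta) * T)).
  assert (He1 : e1 < eps * (beta - a) * D / 2).
  { unfold e1. replace ((a - beta) * T) with (- ((beta - a) * T)) by ring. apply HT1; auto. }
  assert (He2 : e2 <= e1) by (apply exp_le; nra).
  assert (0 < e2) by apply exp_pos.
  replace ((e1 / (a - beta) - e2 / (b - beta) - (1 / (a - beta) - 1 / (b - beta))) / D
           - / (psi s mu beta - q))
    with (- (e1 / (beta - a) / D) + e2 / (beta - b) / D)
    by (rewrite <- Econst; field; repeat split; lra).
  eapply Rle_lt_trans. apply Rabs_triang. rewrite Rabs_Ropp.
  assert (0 < beta - a) by lra. assert (0 < beta - b) by lra.
  rewrite !Rabs_pos_eq.
  2,3: apply Rmult_le_pos; [apply Rmult_le_pos|]; try (left; apply Rinv_0_lt_compat); lra.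
  assert (e2 / (beta - b) <= e1 / (beta - a)).
  { unfold Rdiv. apply Rmult_le_compat; try lra. left; apply Rinv_0_lt_compat; lra.
    apply Rinv_le_contravar; lra. }
  assert (e1 / (beta - a) / D < eps / 2).
  { apply Rmult_lt_reg_l with ((beta - a) * D). nra.
    replace ((beta - a) * D * (e1 / (beta - a) / D)) with e1 by (field; lra). lra. }
  assert (e2 / (beta - b) / D <= e1 / (beta - a) / D)
    by (unfold Rdiv at 2 4; apply Rmult_le_compat_r; [left; apply Rinv_0_lt_compat|]; lra).
  lra.
Qed.
End Candidate.

Lemma monotone_laplace_growth f b L : 0 < b -> C0 f ->
  (forall x y, 0 <= x -> x <= y -> f x <= f y) ->
  (forall eps, 0 < eps -> exists T0, forall T, T0 <= T ->
     Rabs (RInt (fun y => exp (- (b * y)) * f y) 0 T - L) < eps) ->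
  exists C1, 0 <= C1 /\ forall y, 0 <= y -> Rabs (f y) <= C1 * exp (b * y).
Proof.
  intros Hb Cf Hmono Hconv.
  destruct (Hconv 1 Rlt_0_1) as [T0 HT0].
  set (T1 := Rmax T0 0).
  assert (CG : C0 (fun y => exp (- (b * y)) * f y)) by (apply C0_mult; [smooth | exact Cf]).
  (* beyond T1, f T exp (- b (T + 1)) <= int_T^(T+1) exp (- b y) f y <= 2 *)
  assert (Hbig : forall T, T1 <= T -> f T <= 2 * exp b * exp (b * T)).
  { intros T HT. assert (HT0' : T0 <= T) by (eapply Rle_trans; [apply Rmax_l|exact HT]).
    assert (HTp : 0 <= T) by (eapply Rle_trans; [apply Rmax_r|exact HT]).
    destruct (Rle_lt_dec (f T) 0) as [Hn|Hp].
    { pose proof (exp_pos b). pose proof (exp_pos (b * T)). nra. }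
    pose proof (HT0 T HT0') as A1. pose proof (HT0 (T + 1) ltac:(lra)) as A2.
    assert (Ch : RInt (fun y => exp (- (b * y)) * f y) 0 (T + 1)
                 - RInt (fun y => exp (- (b * y)) * f y) 0 T
               = RInt (fun y => exp (- (b * y)) * f y) T (T + 1)).
    { rewrite <- (RInt_ChaslesR _ 0 T (T + 1)) by (apply C0_ex_RInt; auto). lra. }
    assert (Lo : (T + 1 - T) * (exp (- (b * (T + 1))) * f T)
                 <= RInt (fun y => exp (- (b * y)) * f y) T (T + 1)).
    { rewrite <- RInt_constR. apply RInt_le. lra. apply C0_ex_RInt, C0_const. apply C0_ex_RInt; auto.
      intros y Hy. pose proof (Hmono T y HTp ltac:(lra)).
      assert (exp (- (b * (T + 1))) <= exp (- (b * y))) by (apply exp_le; nra).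
      pose proof (exp_pos (- (b * (T + 1)))). nra. }
    assert (E : exp b * exp (b * T) * exp (- (b * (T + 1))) = 1)
      by (rewrite <- !exp_plus; replace (b + b * T + - (b * (T + 1))) with 0 by ring; apply exp_0).
    assert (0 < exp b * exp (b * T)) by (apply Rmult_lt_0_compat; apply exp_pos).
    assert (Hlt : exp (- (b * (T + 1))) * f T < 2)
      by (apply Rabs_def2 in A1; apply Rabs_def2 in A2; lra).
    nra. }
  exists (Rabs (f T1) + 2 * exp b + Rabs (f 0)). split.
  { pose proof (Rabs_pos (f T1)). pose proof (Rabs_pos (f 0)). pose proof (exp_pos b). lra. }
  intros y Hy.
  assert (He1 : 1 <= exp (b * y)) by (rewrite <- exp_0; apply exp_le; nra).
  pose proof (Rabs_pos (f T1)). pose proof (Rabs_pos (f 0)). pose proof (exp_pos b).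
  pose proof (Hmono 0 y (Rle_refl 0) Hy).
  pose proof (Rle_abs (f T1)). pose proof (Rle_abs (- f 0)). rewrite Rabs_Ropp in H4.
  unfold Rabs at 1. destruct Rcase_abs.
  - nra.
  - destruct (Rle_lt_dec T1 y).
    + pose proof (Hbig y r0). nra.
    + assert (0 <= T1) by apply Rmax_r. pose proof (Hmono y T1 Hy ltac:(lra)). nra.
Qed.

Lemma Rmax0_lip x y : Rabs (Rmax y 0 - Rmax x 0) <= Rabs (y - x).
Proof.
  unfold Rmax. destruct (Rle_dec y 0), (Rle_dec x 0); unfold Rabs; repeat destruct Rcase_abs; lra.
Qed.

(** Identification of the scale function: by Lerch's theorem applied to
    [exp (- b0 y) (W y - Wst y)], [W] coincides with [Wst] on [(0, oo)]. *)
Section ScaleFunction.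
Variables (s mu q : R) (W : R -> R).
Hypothesis Hs : 0 < s.
Hypothesis Hq : 0 < q.
Hypothesis HW : is_scale_W s mu q W.

Lemma scale_W_ext_C0 : C0 (fun y => W (Rmax y 0)).
Proof.
  destruct HW as [_ [Hcont _]]. intro x. apply continuity_pt_filterlim.
  intros eps He. destruct (Hcont (Rmax x 0) (Rmax_r _ _) eps He) as [d [Hd Hy]].
  exists d. split; auto. intros y [_ Hyx]. apply Hy. apply Rmax_r.
  eapply Rle_lt_trans. apply Rmax0_lip. auto.
Qed.

Lemma scale_W_Rint beta T : 0 <= T ->
  Rint (fun y => exp (- (beta * y)) * W y) 0 T =
  RInt (fun y => exp (- (beta * y)) * W (Rmax y 0)) 0 T.
Proof.
  intros HT.
  assert (E : forall y, Rmin 0 T < y < Rmax 0 T ->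
     exp (- (beta * y)) * W (Rmax y 0) = exp (- (beta * y)) * W y).
  { intros y Hy. rewrite Rmin_left, Rmax_right in Hy by auto. rewrite Rmax_left; auto. lra. }
  rewrite Rint_eq_RInt.
  - symmetry. apply RInt_extR. auto.
  - apply (ex_RInt_ext (V:=R_NormedModule) (fun y => exp (- (beta * y)) * W (Rmax y 0))); auto.
    apply C0_ex_RInt, C0_mult; [smooth | exact scale_W_ext_C0].
Qed.

Lemma scale_W_growth : exists c C, 0 < c /\ 0 <= C /\
  (forall beta, c <= beta -> laplace_is W beta (/ (psi s mu beta - q))) /\
  forall y, 0 <= y -> Rabs (W y) <= C * exp (c * y).
Proof.
  pose proof HW as [_ [_ [Hmono [Phi [[HPhi0 _] Hlap]]]]].
  exists (Phi + 1).
  destruct (monotone_laplace_growth (fun y => W (Rmax y 0)) (Phi + 1) (/ (psi s mu (Phi + 1) - q))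
              ltac:(lra) scale_W_ext_C0) as [C1 [HC1 Hexp]].
  { intros x y Hx Hxy. rewrite !Rmax_left by lra. apply Hmono; lra. }
  { intros eps He. destruct (Hlap (Phi + 1) ltac:(lra)) as [_ Hc].
    destruct (Hc eps He) as [T0 HT0]. exists (Rmax T0 0). intros T HT.
    rewrite <- scale_W_Rint by (eapply Rle_trans; [apply Rmax_r | exact HT]).
    apply HT0. eapply Rle_trans; [apply Rmax_l | exact HT]. }
  exists C1. split; [lra | split; [exact HC1 | split]].
  - intros beta Hb. apply Hlap. lra.
  - intros y Hy. rewrite <- (Rmax_left y 0) at 1 by lra. apply Hexp; lra.
Qed.

Lemma laplace_difference_zero beta : alpha_plus s mu q < beta ->
  laplace_is W beta (/ (psi s mu beta - q)) ->
  improper_int_zero (fun y => exp (- (beta * y)) * (W (Rmax y 0) - Wst s mu q y)).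
Proof.
  intros Hbeta [_ Hc] eps He.
  destruct (Hc (eps / 2)) as [T1 HT1]. lra.
  destruct (Wst_laplace s mu q Hs Hq beta Hbeta (eps / 2)) as [T2 HT2]. lra.
  exists (Rmax (Rmax T1 T2) 0). intros T HT.
  assert (T1 <= T /\ T2 <= T /\ 0 <= T) as [h1 [h2 h3]].
  { pose proof (Rmax_l (Rmax T1 T2) 0). pose proof (Rmax_r (Rmax T1 T2) 0).
    pose proof (Rmax_l T1 T2). pose proof (Rmax_r T1 T2). lra. }
  rewrite (RInt_extR _ (fun y => exp (- (beta * y)) * W (Rmax y 0) - exp (- (beta * y)) * Wst s mu q y))
    by (intros; ring).
  rewrite RInt_minusR
    by (apply C0_ex_RInt, C0_mult; [smooth | first [exact scale_W_ext_C0 | apply C0_Wst]]).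
  specialize (HT1 T h1). rewrite scale_W_Rint in HT1 by auto. specialize (HT2 T h2).
  apply Rabs_def2 in HT1. apply Rabs_def2 in HT2. apply Rabs_def1; lra.
Qed.

Lemma scale_W_explicit Y : 0 < Y -> W Y = Wst s mu q Y.
Proof.
  intros HY.
  destruct scale_W_growth as [c [C1 [Hc [HC1 [Hlap Hexp]]]]].
  pose proof (alpha_plus_pos s mu q Hs Hq) as Ha. pose proof (alpha_minus_neg s mu q Hs Hq) as Hbn.
  pose proof (Dd_pos s mu q Hs Hq) as HD.
  set (a := alpha_plus s mu q) in *. set (b := alpha_minus s mu q) in *. set (D := Dd s mu q) in *.
  set (c0 := Rmax c a). set (b0 := c0 + 1).
  set (f := fun y => exp (- (b0 * y)) * (W (Rmax y 0) - Wst s mu q y)).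
  assert (Cf : C0 f) by (apply C0_mult; [smooth | apply C0_minus; [exact scale_W_ext_C0 | apply C0_Wst]]).
  assert (Hfb : forall y, 0 <= y -> Rabs (f y) <= (C1 + 2 / D) * exp (- y)).
  { intros y Hy. unfold f. rewrite Rabs_mult, Rabs_pos_eq by (left; apply exp_pos).
    rewrite Rmax_left by lra.
    assert (E1 : exp (c * y) <= exp (c0 * y)) by (apply exp_le; apply Rmult_le_compat_r; auto; apply Rmax_l).
    assert (E2 : exp (a * y) <= exp (c0 * y)) by (apply exp_le; apply Rmult_le_compat_r; auto; apply Rmax_r).
    assert (E3 : exp (b * y) <= exp (a * y)) by (apply exp_le; nra).
    assert (HWs : Rabs (Wst s mu q y) <= 2 / D * exp (c0 * y)).
    { unfold Wst. fold a b D. unfold Rdiv.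
      rewrite Rabs_mult, (Rabs_pos_eq (/ D)) by (left; apply Rinv_0_lt_compat; auto).
      pose proof (exp_pos (a * y)). pose proof (exp_pos (b * y)).
      assert (Rabs (exp (a * y) - exp (b * y)) <= 2 * exp (c0 * y)) by (rewrite Rabs_pos_eq; lra).
      pose proof (Rinv_0_lt_compat D HD). nra. }
    assert (Rabs (W y - Wst s mu q y) <= (C1 + 2 / D) * exp (c0 * y)).
    { eapply Rle_trans. apply Rabs_triang. rewrite Rabs_Ropp. pose proof (Hexp y Hy). nra. }
    assert (exp (- (b0 * y)) * exp (c0 * y) = exp (- y)) by (rewrite <- exp_plus; f_equal; unfold b0; ring).
    pose proof (exp_pos (- (b0 * y))). nra. }
  assert (Hz : forall m : nat, (1 <= m)%nat -> improper_int_zero (fun y => exp (- (INR m * y)) * f y)).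
  { intros m Hm. pose proof (pos_INR m). pose proof (Rmax_l c a). pose proof (Rmax_r c a).
    apply improper_int_zero_ext with (fun y => exp (- ((INR m + b0) * y)) * (W (Rmax y 0) - Wst s mu q y)).
    { intros y. unfold f. replace (- ((INR m + b0) * y)) with (- (INR m * y) + - (b0 * y)) by ring.
      rewrite exp_plus. ring. }
    apply laplace_difference_zero. fold a. unfold b0, c0 in *; lra.
    apply Hlap. unfold b0, c0 in *; lra. }
  assert (Hzero : f Y = 0).
  { refine (zero_of_integrals_zero f Cf _ Y HY).
    intros Y' HY'. exact (lerch_integral_zero f (C1 + 2 / D) Y' Cf Hfb Hz HY'). }
  unfold f in Hzero. rewrite Rmax_left in Hzero by lra.
  pose proof (exp_pos (- (b0 * Y))). apply Rmult_integral in Hzero.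
  destruct Hzero; lra.
Qed.

Lemma scale_W_integral x : 0 <= x ->
  Rint W 0 x = ((exp (alpha_plus s mu q * x) - 1) / alpha_plus s mu q
               - (exp (alpha_minus s mu q * x) - 1) / alpha_minus s mu q) / Dd s mu q.
Proof.
  intros Hx.
  pose proof (alpha_plus_pos s mu q Hs Hq). pose proof (alpha_minus_neg s mu q Hs Hq).
  pose proof (Dd_pos s mu q Hs Hq).
  assert (E : forall y, Rmin 0 x < y < Rmax 0 x -> Wst s mu q y = W y).
  { intros y Hy. rewrite Rmin_left, Rmax_right in Hy by auto.
    symmetry. apply scale_W_explicit. lra. }
  rewrite Rint_eq_RInt.
  2:{ apply (ex_RInt_ext (V:=R_NormedModule) (Wst s mu q)); auto. apply C0_ex_RInt, C0_Wst. }
  rewrite <- (RInt_extR (Wst s mu q)) by auto.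
  unfold Wst. unfold Rdiv at 1.
  rewrite (RInt_extR _ (fun y => / Dd s mu q *
     (exp (alpha_plus s mu q * y) - exp (alpha_minus s mu q * y)))) by (intros; ring).
  rewrite RInt_scalR, RInt_minusR by smooth_int.
  rewrite !RInt_expc by lra. rewrite !Rmult_0_r, exp_0. field. repeat split; lra.
Qed.
End ScaleFunction.

Fixpoint sumN (f : nat -> R) (n : nat) : R :=
  match n with O => 0 | S n => sumN f n + f n end.

Lemma sumN_ext f g n : (forall k, (k < n)%nat -> f k = g k) -> sumN f n = sumN g n.
Proof. induction n; simpl; intros; auto. rewrite IHn, H; auto. Qed.
Lemma sumN_plus f g n : sumN (fun k => f k + g k) n = sumN f n + sumN g n.
Proof. induction n; simpl; auto. ring. rewrite IHn; ring. Qed.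
Lemma sumN_scal c f n : sumN (fun k => c * f k) n = c * sumN f n.
Proof. induction n; simpl; auto. ring. rewrite IHn; ring. Qed.
Lemma sumN_minus f g n : sumN (fun k => f k - g k) n = sumN f n - sumN g n.
Proof. induction n; simpl; auto. ring. rewrite IHn; ring. Qed.
Lemma sumN_geom r n : r <> 1 -> sumN (fun k => r ^ k) n = (1 - r ^ n) / (1 - r).
Proof. intros Hr. induction n; simpl. field. lra. rewrite IHn. field. lra. Qed.
Lemma sumN_abs f n : Rabs (sumN f n) <= sumN (fun k => Rabs (f k)) n.
Proof. induction n; simpl. rewrite Rabs_R0; lra. eapply Rle_trans. apply Rabs_triang. lra. Qed.
Lemma sumN_le f g n : (forall k, (k < n)%nat -> f k <= g k) -> sumN f n <= sumN g n.
Proof. induction n; simpl; intros. lra. apply Rplus_le_compat; auto. Qed.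
Lemma sumN_shift f n m : sumN f (n + m) = sumN f n + sumN (fun j => f (n + j)%nat) m.
Proof.
  induction m; simpl. rewrite Nat.add_0_r; ring.
  rewrite Nat.add_succ_r. simpl. rewrite IHm. ring.
Qed.
Lemma sumN_zero f n : (forall k, (k < n)%nat -> f k = 0) -> sumN f n = 0.
Proof. intros H. induction n; simpl; auto. rewrite IHn, H; auto. ring. Qed.

Lemma geometric_tail_bound (d : nat -> R) C rho z k N : 0 <= C -> 0 < z -> 0 < rho * z <= / 2 ->
  (forall j, Rabs (d j) <= C * rho ^ j) ->
  Rabs (sumN (fun j => d (S k + j)%nat * z ^ (S k + j)) N) <= 2 * C * rho ^ S k * z ^ S k.
Proof.
  intros HC Hz Hrz Hb.
  assert (Hrho : 0 <= rho) by nra.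
  eapply Rle_trans. apply sumN_abs.
  eapply Rle_trans.
  { apply sumN_le with (g := fun j => C * (rho * z) ^ (S k) * (rho * z) ^ j).
    intros j _. rewrite Rabs_mult, (Rabs_pos_eq (z ^ _)) by (apply pow_le; lra).
    eapply Rle_trans. apply Rmult_le_compat_r. apply pow_le; lra. apply Hb.
    right. rewrite !Rpow_mult_distr, !pow_add. ring. }
  rewrite sumN_scal, sumN_geom by lra.
  assert (0 <= (rho * z) ^ N) by (apply pow_le; lra).
  assert ((1 - (rho * z) ^ N) / (1 - rho * z) <= 2).
  { apply Rmult_le_reg_r with (1 - rho * z). lra.
    unfold Rdiv. rewrite Rmult_assoc, Rinv_l by lra. lra. }
  rewrite Rpow_mult_distr.
  assert (0 <= C * (rho ^ S k * z ^ S k))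
    by (apply Rmult_le_pos; auto; apply Rmult_le_pos; apply pow_le; lra).
  nra.
Qed.

Lemma power_series_coeff_zero (d : nat -> R) C rho z1 : 0 < z1 -> 1 <= rho -> 0 <= C ->
  (forall k, Rabs (d k) <= C * rho ^ k) ->
  (forall z, 0 < z < z1 -> forall eps, 0 < eps -> exists N0 : nat, forall N, (N0 <= N)%nat ->
      Rabs (sumN (fun k => d k * z ^ k) N) < eps) ->
  forall k, d k = 0.
Proof.
  intros Hz1 Hrho HC Hb Hs k. induction k as [k IH] using (well_founded_induction lt_wf).
  (* with all earlier coefficients zero, |d k| z^k is bounded by the tail *)
  assert (Bound : forall z, 0 < z < z1 -> z <= / (2 * rho) ->
            Rabs (d k) <= (2 * C * rho ^ (S k) + 1) * z).
  { intros z Hz Hzr.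
    assert (Hrz : 0 < rho * z <= / 2).
    { split. nra. apply Rmult_le_reg_l with (/ rho). apply Rinv_0_lt_compat; lra.
      rewrite <- Rmult_assoc, Rinv_l by lra. replace (/ rho * / 2) with (/ (2 * rho)); [lra|].
      rewrite Rinv_mult. ring. }
    pose proof (pow_lt z k (proj1 Hz)) as Hzk.
    destruct (Hs z Hz (z ^ S k)) as [N0 HN0]. { apply pow_lt; lra. }
    specialize (HN0 (S k + N0)%nat ltac:(lia)).
    rewrite sumN_shift in HN0.
    assert (E1 : sumN (fun k0 => d k0 * z ^ k0) (S k) = d k * z ^ k).
    { simpl. rewrite sumN_zero. ring. intros j Hj. rewrite (IH j Hj). ring. }
    rewrite E1 in HN0.
    pose proof (geometric_tail_bound d C rho z k N0 HC (proj1 Hz) Hrz Hb) as HT.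
    set (T := sumN (fun j => d (S k + j)%nat * z ^ (S k + j)) N0) in *.
    assert (Rabs (d k * z ^ k) < z ^ S k + 2 * C * rho ^ S k * z ^ S k).
    { replace (d k * z ^ k) with ((d k * z ^ k + T) - T) by ring.
      eapply Rle_lt_trans. apply Rabs_triang. rewrite Rabs_Ropp. lra. }
    rewrite Rabs_mult, (Rabs_pos_eq (z ^ k)) in H by (left; exact Hzk).
    apply Rmult_le_reg_r with (z ^ k); auto.
    replace ((2 * C * rho ^ S k + 1) * z * z ^ k)
      with (z ^ S k + 2 * C * rho ^ S k * z ^ S k) by (simpl; ring). lra. }
  destruct (Req_dec (d k) 0) as [E|E]; auto. exfalso.
  set (M := 2 * C * rho ^ S k + 1).
  assert (HM : 0 < M). { unfold M. assert (0 <= rho ^ S k) by (apply pow_le; lra). nra. }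
  set (z := Rmin (Rmin (z1 / 2) (/ (2 * rho))) (Rabs (d k) / (2 * M))).
  assert (Hdk : 0 < Rabs (d k)) by (apply Rabs_pos_lt; auto).
  assert (Hz0 : 0 < z).
  { unfold z. apply Rmin_pos. apply Rmin_pos. lra. apply Rinv_0_lt_compat; lra.
    apply Rdiv_lt_0_compat; lra. }
  assert (z <= z1 / 2) by (unfold z; eapply Rle_trans; [apply Rmin_l|apply Rmin_l]).
  assert (z <= / (2 * rho)) by (unfold z; eapply Rle_trans; [apply Rmin_l|apply Rmin_r]).
  assert (z <= Rabs (d k) / (2 * M)) by (unfold z; apply Rmin_r).
  pose proof (Bound z ltac:(lra) H0). fold M in H2.
  assert (M * z <= Rabs (d k) / 2).
  { apply Rle_trans with (M * (Rabs (d k) / (2 * M))). nra. right. field. lra. }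
  lra.
Qed.

Section StepFunction.
Variables (h : R) (Wh : R -> R).
Hypothesis Hh : 0 < h.
Hypothesis Hstep : forall (k : nat) x, INR k * h <= x < (INR k + 1) * h -> Wh x = Wh (INR k * h).

Lemma step_cell_integral (g : R -> R) (k : nat) : C0 g ->
  ex_RInt (fun y => g y * Wh y) (INR k * h) ((INR k + 1) * h) /\
  RInt (fun y => g y * Wh y) (INR k * h) ((INR k + 1) * h) =
  Wh (INR k * h) * RInt g (INR k * h) ((INR k + 1) * h).
Proof.
  intros Cg.
  assert (E : forall y, Rmin (INR k * h) ((INR k + 1) * h) < y < Rmax (INR k * h) ((INR k + 1) * h) ->
     g y * Wh (INR k * h) = g y * Wh y).
  { intros y Hy. rewrite Rmin_left, Rmax_right in Hy by nra. rewrite (Hstep k y); auto. lra. }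
  split.
  - apply (ex_RInt_ext (V:=R_NormedModule) (fun y => g y * Wh (INR k * h))); auto.
    apply C0_ex_RInt, C0_mult; [exact Cg | apply C0_const].
  - rewrite <- (RInt_extR _ _ _ _ E).
    rewrite (RInt_extR _ (fun y => Wh (INR k * h) * g y)) by (intros; ring).
    apply RInt_scalR. apply C0_ex_RInt; auto.
Qed.

Lemma step_integral (g : R -> R) (N : nat) : C0 g ->
  ex_RInt (fun y => g y * Wh y) 0 (INR N * h) /\
  RInt (fun y => g y * Wh y) 0 (INR N * h) =
  sumN (fun k => Wh (INR k * h) * RInt g (INR k * h) ((INR k + 1) * h)) N.
Proof.
  intros Cg. induction N.
  - simpl. rewrite Rmult_0_l. split. apply ex_RInt_point. rewrite RInt_point. reflexivity.
  - destruct IHN as [IH1 IH2]. destruct (step_cell_integral g N Cg) as [P1 P2].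
    rewrite S_INR. split.
    + eapply ex_RInt_Chasles; eauto.
    + simpl. rewrite <- IH2, <- P2. symmetry. apply RInt_ChaslesR; auto.
Qed.
End StepFunction.

(** With [z = exp (- beta h)], the Laplace
    transform of [Wh] becomes [2 h / Pz z] divided by [beta / (1 - z)], where
    [Pz z = (s + mu h) (1 - rho_plus z) (1 - rho_minus z)]; the roots [1/rho_plus], [1/rho_minus] are
    given through the discriminant [Dh].  Partial fractions then give
    [Wh (k h) = (rho_plus^(k+1) - rho_minus^(k+1)) / Dh =: Wh_closed k]. *)
Definition Dh s mu q h := sqrt (mu ^ 2 + 2 * q * s + q ^ 2 * h ^ 2).
Definition rho_plus s mu q h := (s + q * h ^ 2 + h * Dh s mu q h) / (s + mu * h).
Definition rho_minus s mu q h := (s + q * h ^ 2 - h * Dh s mu q h) / (s + mu * h).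
Definition Wh_closed s mu q h (k : nat) := (rho_plus s mu q h ^ S k - rho_minus s mu q h ^ S k) / Dh s mu q h.
Definition Pz s mu q h z := (s + mu * h) - 2 * (s + q * h ^ 2) * z + (s - mu * h) * z ^ 2.

Section DiscreteRoots.
Variables s mu q h : R.
Hypothesis Hs : 0 < s.
Hypothesis Hq : 0 < q.
Hypothesis Hh : 0 < h.
Hypothesis Hp : 0 < s + mu * h.
Hypothesis Hm : 0 < s - mu * h.

Lemma Dh_radicand_pos : 0 < mu ^ 2 + 2 * q * s + q ^ 2 * h ^ 2.
Proof using Hs Hq.
  assert (0 < q * s) by (apply Rmult_lt_0_compat; lra). pose proof (pow2_ge_0 mu).
  assert (0 <= q ^ 2 * h ^ 2) by (apply Rmult_le_pos; apply pow2_ge_0). lra.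
Qed.
Lemma Dh_sq : Dh s mu q h * Dh s mu q h = mu ^ 2 + 2 * q * s + q ^ 2 * h ^ 2.
Proof using Hs Hq. unfold Dh. apply sqrt_sqrt. pose proof Dh_radicand_pos. lra. Qed.
Lemma Dh_pos : 0 < Dh s mu q h.
Proof using Hs Hq. unfold Dh. apply sqrt_lt_R0. exact Dh_radicand_pos. Qed.
Lemma Dh_ge_D : Dd s mu q <= Dh s mu q h.
Proof using.
  unfold Dh, Dd. apply sqrt_le_1_alt.
  assert (0 <= q ^ 2 * h ^ 2) by (apply Rmult_le_pos; apply pow2_ge_0). lra.
Qed.

Lemma rho_sum : rho_plus s mu q h + rho_minus s mu q h = 2 * (s + q * h ^ 2) / (s + mu * h).
Proof. unfold rho_plus, rho_minus. field. lra. Qed.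
Lemma rho_prod : rho_plus s mu q h * rho_minus s mu q h = (s - mu * h) / (s + mu * h).
Proof.
  unfold rho_plus, rho_minus. pose proof Dh_sq.
  replace ((s + q * h ^ 2 + h * Dh s mu q h) / (s + mu * h)
           * ((s + q * h ^ 2 - h * Dh s mu q h) / (s + mu * h)))
    with (((s + q * h ^ 2) ^ 2 - h ^ 2 * (Dh s mu q h * Dh s mu q h)) / ((s + mu * h) * (s + mu * h)))
    by (field; lra).
  rewrite H. field. lra.
Qed.
Lemma rho_diff : rho_plus s mu q h - rho_minus s mu q h = 2 * h * Dh s mu q h / (s + mu * h).
Proof. unfold rho_plus, rho_minus. field. lra. Qed.
Lemma rho_plus_gt1 : 1 < rho_plus s mu q h.
Proof.
  unfold rho_plus. pose proof (Dd_gt_mu s mu q Hs Hq). pose proof Dh_ge_D. pose proof (Rle_abs mu).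
  apply Rmult_lt_reg_r with (s + mu * h); auto. unfold Rdiv. rewrite Rmult_assoc, Rinv_l by lra.
  assert (mu * h < h * Dh s mu q h) by nra. nra.
Qed.
Lemma rho_minus_pos : 0 < rho_minus s mu q h.
Proof.
  pose proof rho_prod. pose proof rho_plus_gt1.
  assert (0 < (s - mu * h) / (s + mu * h)) by (apply Rdiv_lt_0_compat; auto). nra.
Qed.
Lemma rho_minus_lt_plus : rho_minus s mu q h < rho_plus s mu q h.
Proof.
  pose proof rho_diff. pose proof Dh_pos.
  assert (0 < 2 * h * Dh s mu q h / (s + mu * h)) by (apply Rdiv_lt_0_compat; nra). lra.
Qed.

Lemma Pz_partial_fractions z : rho_plus s mu q h * z <> 1 -> rho_minus s mu q h * z <> 1 ->
  (rho_plus s mu q h / (1 - rho_plus s mu q h * z) - rho_minus s mu q h / (1 - rho_minus s mu q h * z)) / Dh s mu q h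
  = 2 * h / Pz s mu q h z.
Proof.
  intros H1 H2. pose proof Dh_pos.
  assert (HP : Pz s mu q h z = (s + mu * h) * ((1 - rho_plus s mu q h * z) * (1 - rho_minus s mu q h * z))).
  { replace ((1 - rho_plus s mu q h * z) * (1 - rho_minus s mu q h * z)) with
      (1 - (rho_plus s mu q h + rho_minus s mu q h) * z + (rho_plus s mu q h * rho_minus s mu q h) * z ^ 2) by ring.
    rewrite rho_sum, rho_prod. unfold Pz. field. lra. }
  rewrite HP.
  replace (rho_plus s mu q h / (1 - rho_plus s mu q h * z) - rho_minus s mu q h / (1 - rho_minus s mu q h * z)) with
    ((rho_plus s mu q h - rho_minus s mu q h) / ((1 - rho_plus s mu q h * z) * (1 - rho_minus s mu q h * z))) by (field; lra).
  rewrite rho_diff. field. repeat split; lra.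
Qed.

Lemma discrete_laplace_in_z beta z : 0 < beta -> z = exp (- (beta * h)) ->
  psih s mu h beta - q <> 0 ->
  (exp (beta * h) - 1) / (beta * h * (psih s mu h beta - q)) * beta / (1 - z)
  = 2 * h / Pz s mu q h z.
Proof.
  intros Hb Hz Hpsi.
  assert (Hz0 : 0 < z) by (subst; apply exp_pos).
  assert (Hz1 : z < 1) by (subst; rewrite <- exp_0; apply exp_increasing; nra).
  assert (HE : exp (beta * h) = / z) by (subst; rewrite exp_Ropp, Rinv_inv; auto).
  assert (HP : Pz s mu q h z = 2 * h ^ 2 * z * (psih s mu h beta - q)).
  { unfold psih, Pz. rewrite HE, <- Hz. field. split; lra. }
  rewrite HP, HE. field. repeat split; try lra.
Qed.

Lemma Wh_closed_generating z : 0 < z -> rho_plus s mu q h * z <= / 2 ->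
  forall eps, 0 < eps -> exists N0 : nat, forall N, (N0 <= N)%nat ->
  Rabs (sumN (fun k => Wh_closed s mu q h k * z ^ k) N - 2 * h / Pz s mu q h z) < eps.
Proof.
  intros Hz0 Hr1z eps He.
  pose proof rho_plus_gt1 as Hr1. pose proof rho_minus_pos as Hr2. pose proof rho_minus_lt_plus as Hr12.
  pose proof Dh_pos as Hdh.
  set (r1 := rho_plus s mu q h) in *. set (r2 := rho_minus s mu q h) in *. set (dh := Dh s mu q h) in *.
  destruct (pow_lt_1_zero (r1 * z) ltac:(rewrite Rabs_pos_eq; nra) (eps * dh / (8 * r1)))
    as [N2 HN2].
  { apply Rdiv_lt_0_compat; nra. }
  exists N2. intros N HN.
  rewrite <- Pz_partial_fractions by (fold r1 r2; nra). fold r1 r2 dh.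
  rewrite (sumN_ext _ (fun k => / dh * (r1 * (r1 * z) ^ k) + (- / dh) * (r2 * (r2 * z) ^ k))).
  2:{ intros j _. unfold Wh_closed. fold r1 r2 dh. rewrite !Rpow_mult_distr. simpl. field. lra. }
  rewrite sumN_plus, !sumN_scal, !sumN_geom by nra.
  specialize (HN2 N HN). rewrite Rabs_pos_eq in HN2 by (apply pow_le; nra).
  assert (Hp2 : (r2 * z) ^ N <= (r1 * z) ^ N) by (apply pow_incr; nra).
  assert (0 <= (r2 * z) ^ N) by (apply pow_le; nra).
  set (u := (r1 * z) ^ N) in *. set (v := (r2 * z) ^ N) in *.
  replace (/ dh * (r1 * ((1 - u) / (1 - r1 * z))) + - / dh * (r2 * ((1 - v) / (1 - r2 * z))) -
     (r1 / (1 - r1 * z) - r2 / (1 - r2 * z)) / dh)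
    with (- (r1 * u / (1 - r1 * z) / dh) + r2 * v / (1 - r2 * z) / dh) by (field; repeat split; nra).
  eapply Rle_lt_trans. apply Rabs_triang. rewrite Rabs_Ropp.
  assert (B1 : r1 * u / (1 - r1 * z) / dh <= 2 * r1 * u / dh).
  { unfold Rdiv. apply Rmult_le_compat_r. left; apply Rinv_0_lt_compat; lra.
    apply Rle_trans with (r1 * u * 2). apply Rmult_le_compat_l. nra.
    apply Rle_trans with (/ / 2). apply Rinv_le_contravar; lra. lra. lra. }
  assert (B2 : r2 * v / (1 - r2 * z) / dh <= 2 * r1 * u / dh).
  { unfold Rdiv. apply Rmult_le_compat_r. left; apply Rinv_0_lt_compat; lra.
    apply Rle_trans with (r1 * u * 2). 2: lra.
    apply Rle_trans with (r2 * v * 2). apply Rmult_le_compat_l. nra.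
    apply Rle_trans with (/ / 2). apply Rinv_le_contravar; nra. lra. nra. }
  rewrite !Rabs_pos_eq.
  2,3: unfold Rdiv; apply Rmult_le_pos; [apply Rmult_le_pos|]; try (left; apply Rinv_0_lt_compat); nra.
  assert (2 * r1 * u / dh < eps / 4).
  { apply Rmult_lt_reg_r with (dh / (2 * r1)). apply Rdiv_lt_0_compat; lra.
    replace (2 * r1 * u / dh * (dh / (2 * r1))) with u by (field; lra).
    replace (eps / 4 * (dh / (2 * r1))) with (eps * dh / (8 * r1)) by (field; lra). auto. }
  lra.
Qed.
Lemma Wh_closed_geometric k :
  Rabs (Wh_closed s mu q h k) <= 2 * rho_plus s mu q h / Dh s mu q h * rho_plus s mu q h ^ k.
Proof.
  pose proof rho_plus_gt1 as Hr1. pose proof rho_minus_pos as Hr2. pose proof rho_minus_lt_plus as Hr12.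
  pose proof Dh_pos as Hdh.
  set (r1 := rho_plus s mu q h) in *. set (r2 := rho_minus s mu q h) in *. set (dh := Dh s mu q h) in *.
  unfold Wh_closed. fold r1 r2 dh. unfold Rdiv.
  rewrite Rabs_mult, (Rabs_pos_eq (/ dh)) by (left; apply Rinv_0_lt_compat; lra).
  assert (r2 ^ S k <= r1 ^ S k) by (apply pow_incr; lra).
  assert (0 < r2 ^ S k) by (apply pow_lt; lra).
  rewrite Rabs_pos_eq by lra.
  assert (0 < / dh) by (apply Rinv_0_lt_compat; lra).
  apply Rle_trans with (2 * r1 ^ S k * / dh). { apply Rmult_le_compat_r; lra. }
  right. simpl. ring.
Qed.
End DiscreteRoots.

Lemma Wh_grid_generating s mu q h Wh beta : 0 < h ->
  (forall (k : nat) x, INR k * h <= x < (INR k + 1) * h -> Wh x = Wh (INR k * h)) ->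
  0 < beta -> psih s mu h beta - q <> 0 ->
  laplace_is Wh beta ((exp (beta * h) - 1) / (beta * h * (psih s mu h beta - q))) ->
  forall eps, 0 < eps -> exists N1 : nat, forall N, (N1 <= N)%nat ->
  Rabs (sumN (fun k => Wh (INR k * h) * exp (- (beta * h)) ^ k) N
        - 2 * h / Pz s mu q h (exp (- (beta * h)))) < eps.
Proof.
  intros Hh Hstep Hbeta Hpsi [_ Hc] eps He.
  set (z := exp (- (beta * h))).
  assert (Hz0 : 0 < z) by apply exp_pos.
  assert (Hz1 : z < 1) by (unfold z; rewrite <- exp_0; apply exp_increasing; nra).
  destruct (Hc (eps * (1 - z) / beta)) as [T0 HT0].
  { apply Rdiv_lt_0_compat. apply Rmult_lt_0_compat; lra. lra. }
  destruct (nat_above (T0 / h)) as [N1 [_ HN1]].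
  exists N1. intros N HN.
  assert (HT : T0 <= INR N * h).
  { apply le_INR in HN. apply Rle_trans with (INR N1 * h). 2: nra.
    apply Rmult_lt_compat_r with (r := h) in HN1; auto.
    replace (T0 / h * h) with T0 in HN1 by (field; lra). lra. }
  specialize (HT0 _ HT).
  destruct (step_integral h Wh Hh Hstep (fun y => exp (- (beta * y))) N) as [Hex Hint].
  { smooth. }
  rewrite Rint_eq_RInt in HT0 by exact Hex. rewrite Hint in HT0.
  rewrite (sumN_ext _ (fun k => (1 - z) / beta * (Wh (INR k * h) * z ^ k))) in HT0.
  2:{ intros j _. rewrite (RInt_extR _ (fun y => exp ((- beta) * y))) by (intros; f_equal; ring).
      rewrite RInt_expc by lra. unfold z. rewrite exp_powR.
      replace (exp (- beta * ((INR j + 1) * h)))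
        with (exp (INR j * - (beta * h)) * exp (- (beta * h))) by (rewrite <- exp_plus; f_equal; ring).
      replace (exp (- beta * (INR j * h))) with (exp (INR j * - (beta * h))) by (f_equal; ring).
      field. lra. }
  rewrite sumN_scal in HT0. fold z.
  rewrite <- (discrete_laplace_in_z s mu q h Hh beta z) by (auto; lra).
  set (S := sumN (fun k => Wh (INR k * h) * z ^ k) N) in *.
  set (L := (exp (beta * h) - 1) / (beta * h * (psih s mu h beta - q))) in *.
  replace (S - L * beta / (1 - z)) with (beta / (1 - z) * ((1 - z) / beta * S - L)) by (field; lra).
  rewrite Rabs_mult, Rabs_pos_eq by (apply Rlt_le, Rdiv_lt_0_compat; lra).
  apply Rmult_lt_reg_l with ((1 - z) / beta). apply Rdiv_lt_0_compat; lra.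
  replace ((1 - z) / beta * (beta / (1 - z) * Rabs ((1 - z) / beta * S - L)))
    with (Rabs ((1 - z) / beta * S - L)) by (field; lra).
  replace ((1 - z) / beta * eps) with (eps * (1 - z) / beta) by (field; lra). auto.
Qed.


Lemma exp_growth_on_grid f C c h : 0 < h -> (forall x, 0 <= x -> Rabs (f x) <= C * exp (c * x)) ->
  forall k : nat, Rabs (f (INR k * h)) <= C * exp (Rabs c * h) ^ k.
Proof.
  intros Hh Hexpo k.
  assert (HC : 0 <= C).
  { specialize (Hexpo 0 (Rle_refl 0)). rewrite Rmult_0_r, exp_0 in Hexpo.
    pose proof (Rabs_pos (f 0)). lra. }
  assert (0 <= INR k * h) by (pose proof (pos_INR k); nra).
  eapply Rle_trans. apply Hexpo; auto.
  apply Rmult_le_compat_l; auto. rewrite exp_powR. apply exp_le. pose proof (Rle_abs c).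
  replace (INR k * (Rabs c * h)) with (Rabs c * (INR k * h)) by ring.
  apply Rmult_le_compat_r; auto.
Qed.

(** The generating functions of [Wh] and of [Wh_closed] agree near [z = 0]:
    both are [2 h / Pz z]. *)
Lemma Wh_minus_closed_generating s mu q h Wh Phih :
  0 < s -> 0 < q -> 0 < h -> 0 < s + mu * h -> 0 < s - mu * h ->
  (forall (k : nat) x, INR k * h <= x < (INR k + 1) * h -> Wh x = Wh (INR k * h)) ->
  0 <= Phih -> (forall b, 0 <= b -> psih s mu h b = q -> b <= Phih) ->
  (forall beta, Phih < beta ->
     laplace_is Wh beta ((exp (beta * h) - 1) / (beta * h * (psih s mu h beta - q)))) ->
  forall z, 0 < z < exp (- ((Phih + 1) * h)) -> rho_plus s mu q h * z <= / 2 ->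
  forall eps, 0 < eps -> exists N0 : nat, forall N, (N0 <= N)%nat ->
  Rabs (sumN (fun k => (Wh (INR k * h) - Wh_closed s mu q h k) * z ^ k) N) < eps.
Proof.
  intros Hs Hq Hh Hp Hm Hstep HP0 HPmax Hlap z [Hz0 Hzp] Hr1z eps He.
  set (beta := - ln z / h).
  assert (Ezb : z = exp (- (beta * h))).
  { unfold beta. replace (- (- ln z / h * h)) with (ln z) by (field; lra). rewrite exp_ln; auto. }
  assert (Hbeta : Phih + 1 < beta).
  { unfold beta. assert (ln z < - ((Phih + 1) * h)).
    { rewrite <- (ln_exp (- ((Phih + 1) * h))). apply ln_increasing; auto. }
    apply Rmult_lt_reg_r with h; auto. replace (- ln z / h * h) with (- ln z) by (field; lra). lra. }
  assert (Hpsi : psih s mu h beta - q <> 0).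
  { intro E. assert (beta <= Phih) by (apply HPmax; lra). lra. }
  destruct (Wh_grid_generating s mu q h Wh beta Hh Hstep ltac:(lra) Hpsi (Hlap beta ltac:(lra)) (eps / 2))
    as [N1 Sw]. lra.
  rewrite <- Ezb in Sw.
  destruct (Wh_closed_generating s mu q h Hs Hq Hh Hp Hm z Hz0 Hr1z (eps / 2)) as [N2 Sv]. lra.
  exists (max N1 N2). intros N HN.
  rewrite (sumN_ext _ (fun k => Wh (INR k * h) * z ^ k - Wh_closed s mu q h k * z ^ k)) by (intros; ring).
  rewrite sumN_minus.
  specialize (Sw N ltac:(lia)). specialize (Sv N ltac:(lia)).
  apply Rabs_def2 in Sw. apply Rabs_def2 in Sv. apply Rabs_def1; lra.
Qed.

(** Identification of the discrete scale function on the grid, by uniqueness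
    of power series coefficients. *)
Lemma Wh_explicit s mu q h Wh : 0 < s -> 0 < q -> 0 < h -> 0 < s + mu * h -> 0 < s - mu * h ->
  is_scale_Wh s mu q h Wh -> forall k, Wh (INR k * h) = Wh_closed s mu q h k.
Proof.
  intros Hs Hq Hh Hp Hm HWh k.
  destruct HWh as [_ [Hstep [[C [c Hexpo]] [Phih [[HP0 [_ HPmax]] Hlap]]]]].
  assert (Hr1 : 1 < rho_plus s mu q h) by (apply rho_plus_gt1; auto).
  assert (Hdh : 0 < Dh s mu q h) by (apply Dh_pos; auto).
  pose proof (exp_growth_on_grid Wh C c h Hh Hexpo) as HWg.
  pose proof (Wh_closed_geometric s mu q h Hs Hq Hh Hp Hm) as HVg.
  assert (HC : 0 <= C) by (specialize (HWg O); simpl in HWg; pose proof (Rabs_pos (Wh (0 * h))); lra).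
  set (r1 := rho_plus s mu q h) in *. set (dh := Dh s mu q h) in *.
  set (rho := Rmax (exp (Rabs c * h)) r1).
  assert (Hrho : 1 <= rho) by (unfold rho; eapply Rle_trans; [| apply Rmax_r]; lra).
  set (z1 := Rmin (/ (2 * r1)) (exp (- ((Phih + 1) * h)))).
  cut (Wh (INR k * h) - Wh_closed s mu q h k = 0). lra.
  apply (power_series_coeff_zero (fun k => Wh (INR k * h) - Wh_closed s mu q h k)
           (C + 2 * r1 / dh) rho z1).
  - unfold z1. apply Rmin_pos. apply Rinv_0_lt_compat; lra. apply exp_pos.
  - exact Hrho.
  - assert (0 < 2 * r1 / dh) by (apply Rdiv_lt_0_compat; lra). lra.
  - intro j.
    unfold Rminus. eapply Rle_trans. apply Rabs_triang. rewrite Rabs_Ropp, Rmult_plus_distr_r.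
    apply Rplus_le_compat.
    + eapply Rle_trans. apply HWg. apply Rmult_le_compat_l; auto.
      apply pow_incr. split. left; apply exp_pos. apply Rmax_l.
    + eapply Rle_trans. apply HVg. apply Rmult_le_compat_l.
      apply Rlt_le, Rdiv_lt_0_compat; lra.
      apply pow_incr. split; [lra | apply Rmax_r].
  - intros z [Hz0 Hz1].
    apply (Wh_minus_closed_generating s mu q h Wh Phih); auto.
    + split; auto. eapply Rlt_le_trans; [exact Hz1 | apply Rmin_r].
    + apply Rle_trans with (r1 * / (2 * r1)).
      apply Rmult_le_compat_l; [lra | eapply Rle_trans; [left; exact Hz1 | apply Rmin_l]].
      right; field; lra.
Qed.

Lemma mvt_bound g dg Y M n : 0 <= M -> (forall t, is_derive g t (dg t)) -> g 0 = 0 ->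
  (forall t, Rabs t <= Y -> Rabs (dg t) <= M * Rabs t ^ n) ->
  forall y, Rabs y <= Y -> Rabs (g y) <= M * Rabs y ^ S n.
Proof.
  intros HM Hd H0 Hb y Hy.
  destruct (MVT_gen g 0 y dg) as [c [Hc E]].
  - intros; auto.
  - intros. apply continuity_pt_filterlim. apply (ex_derive_continuous (K:=R_AbsRing) (V:=R_NormedModule)).
    eexists; apply Hd.
  - rewrite H0, Rminus_0_r, Rminus_0_r in E. rewrite E.
    assert (Rabs c <= Rabs y).
    { unfold Rmin, Rmax in Hc. destruct (Rle_dec 0 y); unfold Rabs; repeat destruct Rcase_abs; lra. }
    rewrite Rabs_mult. simpl.
    assert (Rabs (dg c) <= M * Rabs y ^ n).
    { eapply Rle_trans. apply Hb. lra. apply Rmult_le_compat_l; auto. apply pow_incr. split; auto. apply Rabs_pos. }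
    pose proof (Rabs_pos (dg c)). pose proof (Rabs_pos y). nra.
Qed.

Definition exp_rem1 t := exp t - 1.
Definition exp_rem2 t := exp t - 1 - t.
Definition exp_rem3 t := exp t - 1 - t - t ^ 2 / 2.
Definition exp_rem4 t := exp t - 1 - t - t ^ 2 / 2 - t ^ 3 / 6.

Lemma exp_rem_bounds : forall t, Rabs t <= 1 ->
  Rabs (exp_rem3 t) <= 3 * Rabs t ^ 3 /\ Rabs (exp_rem4 t) <= 3 * Rabs t ^ 4.
Proof.
  (* each remainder vanishes at 0 and has the previous one as derivative *)
  assert (B0 : forall t, Rabs t <= 1 -> Rabs (exp t) <= 3 * Rabs t ^ 0).
  { intros t Ht. simpl. rewrite Rabs_pos_eq by (left; apply exp_pos). rewrite Rmult_1_r.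
    eapply Rle_trans. apply exp_le. apply Rle_trans with (Rabs t). apply Rle_abs. exact Ht.
    apply exp_le_3. }
  assert (B1 : forall t, Rabs t <= 1 -> Rabs (exp_rem1 t) <= 3 * Rabs t ^ 1).
  { apply (mvt_bound exp_rem1 exp 1 3 0); try lra; auto; unfold exp_rem1.
    - intro; auto_derive; auto. toR; ring.
    - rewrite exp_0; toR; ring. }
  assert (B2 : forall t, Rabs t <= 1 -> Rabs (exp_rem2 t) <= 3 * Rabs t ^ 2).
  { apply (mvt_bound exp_rem2 exp_rem1 1 3 1); try lra; auto; unfold exp_rem1, exp_rem2.
    - intro; auto_derive; auto; toR; ring.
    - rewrite exp_0; toR; ring. }
  assert (B3 : forall t, Rabs t <= 1 -> Rabs (exp_rem3 t) <= 3 * Rabs t ^ 3).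
  { apply (mvt_bound exp_rem3 exp_rem2 1 3 2); try lra; auto; unfold exp_rem2, exp_rem3.
    - intro; auto_derive; auto; toR; field.
    - rewrite exp_0; toR; field. }
  assert (B4 : forall t, Rabs t <= 1 -> Rabs (exp_rem4 t) <= 3 * Rabs t ^ 4).
  { apply (mvt_bound exp_rem4 exp_rem3 1 3 3); try lra; auto; unfold exp_rem3, exp_rem4.
    - intro; auto_derive; auto; toR; field.
    - rewrite exp_0; toR; field. }
  intros t Ht. auto.
Qed.

Section SmallStep.
Variables s mu q : R.
Hypothesis Hs : 0 < s.
Hypothesis Hq : 0 < q.
Let a := alpha_plus s mu q.
Let b := alpha_minus s mu q.
Let D := Dd s mu q.

Definition h_small := Rmin (Rmin (Rmin 1 (s / (2 * Rabs mu + 1)))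
   (Rmin (1 / (alpha_plus s mu q + 1)) (1 / (- alpha_minus s mu q + 1)))) ((Dd s mu q + mu) / (2 * q)).

Lemma h_small_pos : 0 < h_small.
Proof.
  pose proof (alpha_plus_pos s mu q Hs Hq). pose proof (alpha_minus_neg s mu q Hs Hq).
  pose proof (Dd_gt_mu s mu q Hs Hq).
  pose proof (Rle_abs (- mu)). rewrite Rabs_Ropp in H2. pose proof (Rabs_pos mu).
  unfold h_small. repeat apply Rmin_pos; try apply Rdiv_lt_0_compat; lra.
Qed.

Lemma h_small_props h : 0 < h < h_small ->
  h <= 1 /\ Rabs mu * h <= s / 2 /\ a * h <= 1 /\ - b * h <= 1 /\ q * h <= (D + mu) / 2.
Proof.
  intros [H0 H1]. pose proof (alpha_plus_pos s mu q Hs Hq). pose proof (alpha_minus_neg s mu q Hs Hq).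
  fold a b in H, H2.
  pose proof (Rabs_pos mu).
  unfold h_small in H1. fold a b D in H1.
  apply Rlt_le in H1.
  pose proof (Rle_trans _ _ _ H1 (Rmin_l _ _)) as H4. pose proof (Rle_trans _ _ _ H1 (Rmin_r _ _)) as H5.
  pose proof (Rle_trans _ _ _ H4 (Rmin_l _ _)) as H6. pose proof (Rle_trans _ _ _ H4 (Rmin_r _ _)) as H7.
  pose proof (Rle_trans _ _ _ H6 (Rmin_r _ _)) as H8.
  pose proof (Rle_trans _ _ _ H6 (Rmin_l _ _)) as A1.
  pose proof (Rle_trans _ _ _ H7 (Rmin_l _ _)) as H9. pose proof (Rle_trans _ _ _ H7 (Rmin_r _ _)) as H10.
  repeat split; auto.
  - apply Rle_trans with (Rabs mu * (s / (2 * Rabs mu + 1))). apply Rmult_le_compat_l; auto.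
    set (x := s / (2 * Rabs mu + 1)).
    assert (Hx : x * (2 * Rabs mu + 1) = s) by (unfold x; field; lra).
    assert (0 <= x) by (unfold x; apply Rlt_le, Rdiv_lt_0_compat; lra). nra.
  - apply Rle_trans with (a * (1 / (a + 1))). apply Rmult_le_compat_l; lra.
    apply Rmult_le_reg_r with (a + 1). lra. field_simplify; lra.
  - apply Rle_trans with (- b * (1 / (- b + 1))). apply Rmult_le_compat_l; lra.
    apply Rmult_le_reg_r with (- b + 1). lra. field_simplify; lra.
  - apply Rle_trans with (q * ((D + mu) / (2 * q))). apply Rmult_le_compat_l; lra. right. field. lra.
Qed.

Lemma small_h_bounds h : 0 < h < h_small ->
  h <= 1 /\ s / 2 <= s + mu * h <= 3 * s / 2 /\ s / 2 <= s - mu * h <= 3 * s / 2 /\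
  a * h <= 1 /\ - b * h <= 1 /\ q * h <= (D + mu) / 2.
Proof.
  intros Hh. destruct (h_small_props h Hh) as [A [B [C [E F]]]].
  pose proof (Rle_abs mu). pose proof (Rle_abs (- mu)). rewrite Rabs_Ropp in H0.
  repeat split; auto; nra.
Qed.

Lemma psih_error beta h : 0 < h -> Rabs (beta * h) <= 1 ->
  Rabs (psih s mu h beta - psi s mu beta) <= (3 * Rabs mu * Rabs beta ^ 3 + 3 * s * Rabs beta ^ 4) * h ^ 2.
Proof.
  intros Hh Hy. set (y := beta * h) in *.
  assert (E : psih s mu h beta - psi s mu beta = mu * (exp_rem3 y - exp_rem3 (- y)) / (2 * h) + s * (exp_rem4 y + exp_rem4 (- y)) / (2 * h ^ 2)).
  { unfold psih, psi, exp_rem3, exp_rem4, y. field. lra. }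
  rewrite E. destruct (exp_rem_bounds y Hy) as [B3 B4]. assert (Rabs (- y) <= 1) by (rewrite Rabs_Ropp; auto).
  destruct (exp_rem_bounds (- y) H) as [B3' B4']. rewrite Rabs_Ropp in B3', B4'.
  assert (Ey : Rabs y = Rabs beta * h) by (unfold y; rewrite Rabs_mult, (Rabs_pos_eq h); lra).
  rewrite Ey in *.
  eapply Rle_trans. apply Rabs_triang. unfold Rdiv. rewrite !Rabs_mult.
  rewrite (Rabs_pos_eq s), (Rabs_pos_eq (/ (2 * h))), (Rabs_pos_eq (/ (2 * h ^ 2))) by
    (try lra; left; apply Rinv_0_lt_compat; nra).
  assert (Rabs (exp_rem3 y - exp_rem3 (- y)) <= 6 * (Rabs beta * h) ^ 3).
  { unfold Rminus. eapply Rle_trans. apply Rabs_triang. rewrite Rabs_Ropp. lra. }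
  assert (Rabs (exp_rem4 y + exp_rem4 (- y)) <= 6 * (Rabs beta * h) ^ 4).
  { eapply Rle_trans. apply Rabs_triang. lra. }
  pose proof (Rabs_pos mu). pose proof (Rabs_pos beta).
  apply Rle_trans with (Rabs mu * (6 * (Rabs beta * h) ^ 3) * / (2 * h) + s * (6 * (Rabs beta * h) ^ 4) * / (2 * h ^ 2)).
  - apply Rplus_le_compat; apply Rmult_le_compat_r; try (left; apply Rinv_0_lt_compat; nra);
      apply Rmult_le_compat_l; lra.
  - right. field. lra.
Qed.

Lemma char_poly_at_exp beta h : 0 < h -> 0 < s + mu * h ->
  (s + mu * h) * (exp (beta * h) - rho_plus s mu q h) * (exp (beta * h) - rho_minus s mu q h)
  = 2 * h ^ 2 * exp (beta * h) * (psih s mu h beta - q).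
Proof.
  intros Hh Hp. set (E := exp (beta * h)).
  replace ((s + mu * h) * (E - rho_plus s mu q h) * (E - rho_minus s mu q h)) with
    ((s + mu * h) * (E * E - (rho_plus s mu q h + rho_minus s mu q h) * E + rho_plus s mu q h * rho_minus s mu q h)) by ring.
  rewrite (rho_sum s mu q h Hp), (rho_prod s mu q h Hs Hq Hp). unfold psih. fold E.
  rewrite exp_Ropp. fold E. assert (0 < E) by apply exp_pos. field. lra.
Qed.
End SmallStep.

Section RootExpansion.
Variables s mu q : R.
Hypothesis Hs : 0 < s.
Hypothesis Hq : 0 < q.
Let a := alpha_plus s mu q.
Let b := alpha_minus s mu q.
Let D := Dd s mu q.

Lemma one_minus_rho_minus h : 0 < h < h_small s mu q -> h * (D + mu) / (3 * s) <= 1 - rho_minus s mu q h.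
Proof.
  intros Hh. destruct (small_h_bounds s mu q Hs Hq h Hh) as [A [[B1 B2] [[C1 C2] [E [F G]]]]].
  fold a in E. fold b in F. fold D in G.
  pose proof (Dh_ge_D s mu q h). fold D in H.
  assert (E1 : 1 - rho_minus s mu q h = h * (mu + Dh s mu q h - q * h) / (s + mu * h)) by (unfold rho_minus; field; lra).
  rewrite E1. pose proof (Dd_gt_mu s mu q Hs Hq). fold D in H0. pose proof (Rle_abs (- mu)).
  rewrite Rabs_Ropp in H1.
  unfold Rdiv. apply Rle_trans with (h * ((D + mu) / 2) * / (3 * s / 2)).
  - right. field. lra.
  - apply Rmult_le_compat. nra. left; apply Rinv_0_lt_compat; lra. nra. apply Rinv_le_contravar; lra.
Qed.

Lemma rho_plus_minus_one h : 0 < h < h_small s mu q -> h * (D - mu) / (3 * s) <= rho_plus s mu q h - 1.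
Proof.
  intros Hh. destruct (small_h_bounds s mu q Hs Hq h Hh) as [A [[B1 B2] [[C1 C2] [E [F G]]]]].
  fold a in E. fold b in F. fold D in G.
  pose proof (Dh_ge_D s mu q h). fold D in H.
  assert (E1 : rho_plus s mu q h - 1 = h * (q * h + Dh s mu q h - mu) / (s + mu * h)) by (unfold rho_plus; field; lra).
  rewrite E1. pose proof (Dd_gt_mu s mu q Hs Hq). fold D in H0. pose proof (Rle_abs mu).
  unfold Rdiv. apply Rle_trans with (h * (D - mu) * / (3 * s / 2)).
  - apply Rmult_le_compat_l. nra. apply Rinv_le_contravar. lra. lra.
  - apply Rmult_le_compat. nra. left; apply Rinv_0_lt_compat; lra. assert (0 < q * h) by nra. nra.
    apply Rinv_le_contravar; lra.
Qed.

(** Constants of the [O(h^2)] consistency error of [psih] at [alpha_plus], [alpha_minus]. *)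
Definition Ca := 3 * Rabs mu * Rabs a ^ 3 + 3 * s * Rabs a ^ 4.
Definition Cb := 3 * Rabs mu * Rabs b ^ 3 + 3 * s * Rabs b ^ 4.
(** The [O(h^3)] constants of the root expansions. *)
Definition Ka := 36 * Ca / (D + mu).
Definition Kb := 12 * Cb / (D - mu).

Lemma Ka_nonneg : 0 <= Ka.
Proof.
  unfold Ka, Ca. pose proof (Dd_gt_mu s mu q Hs Hq). pose proof (Rle_abs (- mu)).
  rewrite Rabs_Ropp in H0. fold D in H. pose proof (Rabs_pos mu). pose proof (Rabs_pos a).
  assert (0 <= Rabs a ^ 3) by (apply pow_le; lra). assert (0 <= Rabs a ^ 4) by (apply pow_le; lra).
  apply Rmult_le_pos. nra. left; apply Rinv_0_lt_compat; lra.
Qed.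

Lemma Kb_nonneg : 0 <= Kb.
Proof.
  unfold Kb, Cb. pose proof (Dd_gt_mu s mu q Hs Hq). pose proof (Rle_abs mu).
  fold D in H. pose proof (Rabs_pos mu). pose proof (Rabs_pos b).
  assert (0 <= Rabs b ^ 3) by (apply pow_le; lra). assert (0 <= Rabs b ^ 4) by (apply pow_le; lra).
  apply Rmult_le_pos. nra. left; apply Rinv_0_lt_compat; lra.
Qed.


(** Since [psih (alpha_plus) - q = O(h^2)] and the other factor of the characteristic
    polynomial is of order [h], the root [rho_plus] is within [O(h^3)] of [exp (alpha_plus h)]. *)
Lemma rho_plus_near_exp h : 0 < h < h_small s mu q -> Rabs (exp (a * h) - rho_plus s mu q h) <= Ka * h ^ 3.
Proof.
  intros Hh. unfold Ka. destruct (small_h_bounds s mu q Hs Hq h Hh) as [A [[B1 B2] [[C1 C2] [E [F G]]]]].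
  fold a in E. fold b in F. fold D in G.
  pose proof (alpha_plus_pos s mu q Hs Hq). fold a in H.
  pose proof (Dd_gt_mu s mu q Hs Hq). fold D in H0. pose proof (Rle_abs (- mu)). rewrite Rabs_Ropp in H1.
  assert (Ef : (s + mu * h) * (exp (a * h) - rho_plus s mu q h) * (exp (a * h) - rho_minus s mu q h)
      = 2 * h ^ 2 * exp (a * h) * (psih s mu h a - q)) by (apply char_poly_at_exp; auto; lra).
  assert (H2 : psi s mu a = q) by (apply psi_alpha_plus; auto).
  assert (Hy : Rabs (a * h) <= 1) by (rewrite Rabs_pos_eq; nra).
  assert (Herr : Rabs (psih s mu h a - psi s mu a) <= (3 * Rabs mu * Rabs a ^ 3 + 3 * s * Rabs a ^ 4) * h ^ 2)
    by (apply psih_error; lra). rewrite H2 in Herr. fold (Ca) in Herr.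
  assert (HE : exp (a * h) <= 3) by (eapply Rle_trans; [apply exp_le; exact E|apply exp_le_3]).
  assert (HE1 : 1 <= exp (a * h)) by (rewrite <- exp_0; apply exp_le; nra).
  pose proof (one_minus_rho_minus h Hh) as H3.
  assert (Hd : h * (D + mu) / (3 * s) <= exp (a * h) - rho_minus s mu q h) by lra.
  assert (Hpos : 0 < h * (D + mu) / (3 * s)) by (apply Rdiv_lt_0_compat; nra).
  assert (HCa : 0 <= Ca) by (unfold Ca; pose proof (Rabs_pos mu); pose proof (Rabs_pos a);
     assert (0 <= Rabs a ^ 3) by (apply pow_le; lra); assert (0 <= Rabs a ^ 4) by (apply pow_le; lra); nra).
  assert (Hprod : Rabs (exp (a * h) - rho_plus s mu q h) * ((s + mu * h) * (exp (a * h) - rho_minus s mu q h)) <= 6 * Ca * h ^ 4).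
  { replace (Rabs (exp (a * h) - rho_plus s mu q h) * ((s + mu * h) * (exp (a * h) - rho_minus s mu q h)))
      with (Rabs ((s + mu * h) * (exp (a * h) - rho_plus s mu q h) * (exp (a * h) - rho_minus s mu q h))).
    2:{ rewrite !Rabs_mult, (Rabs_pos_eq (s + mu * h)), (Rabs_pos_eq (exp (a * h) - rho_minus s mu q h)) by lra. ring. }
    rewrite Ef. rewrite !Rabs_mult.
    rewrite (Rabs_pos_eq 2), (Rabs_pos_eq (h ^ 2)), (Rabs_pos_eq (exp (a * h))) by
       (try lra; apply pow_le; lra).
    assert (0 <= h ^ 2) by (apply pow_le; lra).
    apply Rle_trans with (2 * h ^ 2 * 3 * (Ca * h ^ 2)).
    apply Rmult_le_compat; try nra. apply Rabs_pos. right; ring. }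
  assert (Hlow : h * (D + mu) / 6 <= (s + mu * h) * (exp (a * h) - rho_minus s mu q h)).
  { apply Rle_trans with (s / 2 * (h * (D + mu) / (3 * s))). right; field; lra.
    apply Rmult_le_compat; lra. }
  assert (Hlp : 0 < h * (D + mu) / 6) by (apply Rdiv_lt_0_compat; nra).
  pose proof (Rabs_pos (exp (a * h) - rho_plus s mu q h)).
  assert (Rabs (exp (a * h) - rho_plus s mu q h) * (h * (D + mu) / 6) <= 6 * Ca * h ^ 4) by nra.
  apply Rmult_le_reg_r with (h * (D + mu) / 6); auto.
  replace (36 * Ca / (D + mu) * h ^ 3 * (h * (D + mu) / 6)) with (6 * Ca * h ^ 4) by (field; lra). auto.
Qed.

Lemma rho_minus_near_exp h : 0 < h < h_small s mu q -> Rabs (exp (b * h) - rho_minus s mu q h) <= Kb * h ^ 3.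
Proof.
  intros Hh. unfold Kb. destruct (small_h_bounds s mu q Hs Hq h Hh) as [A [[B1 B2] [[C1 C2] [E [F G]]]]].
  fold a in E. fold b in F. fold D in G.
  pose proof (alpha_minus_neg s mu q Hs Hq). fold b in H.
  pose proof (Dd_gt_mu s mu q Hs Hq). fold D in H0. pose proof (Rle_abs mu).
  assert (Ef : (s + mu * h) * (exp (b * h) - rho_plus s mu q h) * (exp (b * h) - rho_minus s mu q h)
      = 2 * h ^ 2 * exp (b * h) * (psih s mu h b - q)) by (apply char_poly_at_exp; auto; lra).
  pose proof (psi_alpha_minus s mu q Hs Hq) as H2. fold b in H2.
  assert (Hy : Rabs (b * h) <= 1) by (rewrite Rabs_left; nra).
  assert (Herr : Rabs (psih s mu h b - psi s mu b) <= (3 * Rabs mu * Rabs b ^ 3 + 3 * s * Rabs b ^ 4) * h ^ 2)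
    by (apply psih_error; lra). rewrite H2 in Herr. fold (Cb) in Herr.
  assert (HE : exp (b * h) <= 1) by (rewrite <- exp_0; apply exp_le; nra).
  assert (HE0 : 0 < exp (b * h)) by apply exp_pos.
  pose proof (rho_plus_minus_one h Hh) as H3.
  assert (Hd : h * (D - mu) / (3 * s) <= rho_plus s mu q h - exp (b * h)) by lra.
  assert (Hpos : 0 < h * (D - mu) / (3 * s)) by (apply Rdiv_lt_0_compat; nra).
  assert (HCb : 0 <= Cb) by (unfold Cb; pose proof (Rabs_pos mu); pose proof (Rabs_pos b);
     assert (0 <= Rabs b ^ 3) by (apply pow_le; lra); assert (0 <= Rabs b ^ 4) by (apply pow_le; lra); nra).
  assert (Hprod : Rabs (exp (b * h) - rho_minus s mu q h) * ((s + mu * h) * (rho_plus s mu q h - exp (b * h))) <= 2 * Cb * h ^ 4).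
  { replace (Rabs (exp (b * h) - rho_minus s mu q h) * ((s + mu * h) * (rho_plus s mu q h - exp (b * h))))
      with (Rabs ((s + mu * h) * (exp (b * h) - rho_plus s mu q h) * (exp (b * h) - rho_minus s mu q h))).
    2:{ rewrite !Rabs_mult, (Rabs_pos_eq (s + mu * h)) by lra.
        rewrite (Rabs_minus_sym (exp (b * h))), (Rabs_pos_eq (rho_plus s mu q h - exp (b * h))) by lra.
        ring. }
    rewrite Ef. rewrite !Rabs_mult.
    rewrite (Rabs_pos_eq 2), (Rabs_pos_eq (h ^ 2)), (Rabs_pos_eq (exp (b * h))) by
       (try lra; apply pow_le; lra).
    assert (0 <= h ^ 2) by (apply pow_le; lra).
    apply Rle_trans with (2 * h ^ 2 * 1 * (Cb * h ^ 2)).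
    apply Rmult_le_compat; try nra. apply Rabs_pos. right; ring. }
  assert (Hlow : h * (D - mu) / 6 <= (s + mu * h) * (rho_plus s mu q h - exp (b * h))).
  { apply Rle_trans with (s / 2 * (h * (D - mu) / (3 * s))). right; field; lra.
    apply Rmult_le_compat; lra. }
  assert (Hlp : 0 < h * (D - mu) / 6) by (apply Rdiv_lt_0_compat; nra).
  pose proof (Rabs_pos (exp (b * h) - rho_minus s mu q h)).
  assert (Rabs (exp (b * h) - rho_minus s mu q h) * (h * (D - mu) / 6) <= 2 * Cb * h ^ 4) by nra.
  apply Rmult_le_reg_r with (h * (D - mu) / 6); auto.
  replace (12 * Cb / (D - mu) * h ^ 3 * (h * (D - mu) / 6)) with (2 * Cb * h ^ 4) by (field; lra). auto.
Qed.
End RootExpansion.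

(** Coefficients of the closed forms of [Z] and [Zh]: [Z x - 1 = q (u1 e^(a x) - u2 e^(b x) - 1/q)]
    and similarly with [v1, v2, rho_plus^k, rho_minus^k]; the key expansion is
    [v1 = u1 + h / (2 Dd) + O(h^2)]. *)
Section Coefficients.
Variables s mu q : R.
Hypothesis Hs : 0 < s.
Hypothesis Hq : 0 < q.
Let a := alpha_plus s mu q.
Let b := alpha_minus s mu q.
Let D := Dd s mu q.

Definition u1 := 1 / (alpha_plus s mu q * Dd s mu q).
Definition u2 := 1 / (alpha_minus s mu q * Dd s mu q).
Definition v1 h := h * rho_plus s mu q h / ((rho_plus s mu q h - 1) * Dh s mu q h).
Definition v2 h := h * rho_minus s mu q h / ((rho_minus s mu q h - 1) * Dh s mu q h).

(** Both pairs of coefficients differ by [1 / q], which makes [Z 0 = Zh 0 = 1]. *)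
Lemma u_diff : u1 - u2 = 1 / q.
Proof.
  pose proof (alpha_plus_pos s mu q Hs Hq). pose proof (alpha_minus_neg s mu q Hs Hq).
  pose proof (Dd_pos s mu q Hs Hq).
  assert (E1 : a - b = 2 * D / s) by (apply alpha_diff; auto).
  assert (E2 : a * b = - 2 * q / s) by (apply alpha_prod; auto).
  unfold u1, u2. fold a b D. fold a in H. fold b in H0. fold D in H1.
  replace (1 / (a * D) - 1 / (b * D)) with ((b - a) / ((a * b) * D)) by (field; repeat split; lra).
  rewrite E2. replace (b - a) with (- (2 * D / s)) by lra. field. repeat split; lra.
Qed.

Lemma v_diff h : 0 < h < h_small s mu q -> v1 h - v2 h = 1 / q.
Proof.
  intros Hh. destruct (small_h_bounds s mu q Hs Hq h Hh) as [A [[B1 B2] [[C1 C2] [E [F G]]]]].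
  pose proof (rho_plus_minus_one s mu q Hs Hq h Hh). pose proof (one_minus_rho_minus s mu q Hs Hq h Hh).
  pose proof (Dd_gt_mu s mu q Hs Hq) as H2. fold D in H2, H, H0. pose proof (Rle_abs mu).
  pose proof (Rle_abs (- mu)). rewrite Rabs_Ropp in H3.
  assert (0 < h * (D - mu) / (3 * s)) by (apply Rdiv_lt_0_compat; nra).
  assert (0 < h * (D + mu) / (3 * s)) by (apply Rdiv_lt_0_compat; nra).
  assert (Hdh : 0 < Dh s mu q h) by (apply Dh_pos; lra).
  assert (Es : rho_plus s mu q h + rho_minus s mu q h = 2 * (s + q * h ^ 2) / (s + mu * h)) by (apply rho_sum; lra).
  assert (Ep : rho_plus s mu q h * rho_minus s mu q h = (s - mu * h) / (s + mu * h)) by (apply rho_prod; lra).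
  assert (Ed : rho_plus s mu q h - rho_minus s mu q h = 2 * h * Dh s mu q h / (s + mu * h)) by (apply rho_diff; lra).
  set (r1 := rho_plus s mu q h) in *. set (r2 := rho_minus s mu q h) in *. set (dh := Dh s mu q h) in *.
  unfold v1, v2. fold r1 r2 dh.
  assert (Epr : (r1 - 1) * (r2 - 1) = - 2 * q * h ^ 2 / (s + mu * h)).
  { replace ((r1 - 1) * (r2 - 1)) with (r1 * r2 - (r1 + r2) + 1) by ring. rewrite Ep, Es. field. lra. }
  replace (h * r1 / ((r1 - 1) * dh) - h * r2 / ((r2 - 1) * dh)) with (h * (r2 - r1) / (((r1 - 1) * (r2 - 1)) * dh))
    by (field; repeat split; lra).
  rewrite Epr. replace (r2 - r1) with (- (2 * h * dh / (s + mu * h))) by lra. field. repeat split; lra.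
Qed.

Definition Kn := 13 / 2 * alpha_plus s mu q ^ 3 + 2 * Ka s mu q.
Definition Kdel := (3 * s * Kn / (2 * alpha_plus s mu q * (Dd s mu q - mu))) / Dd s mu q
   + (1 / alpha_plus s mu q + 1 / 2) * q ^ 2 / (2 * Dd s mu q ^ 3).

Lemma Dh_inv_near h : 0 < h -> Rabs (1 / Dh s mu q h - 1 / D) <= q ^ 2 * h ^ 2 / (2 * D ^ 3).
Proof.
  intros Hh. pose proof (Dd_pos s mu q Hs Hq) as HD. fold D in HD.
  assert (Hdh : 0 < Dh s mu q h) by (apply Dh_pos; lra).
  assert (HdD : D <= Dh s mu q h) by apply Dh_ge_D.
  set (dh := Dh s mu q h) in *.
  assert (Esq : dh * dh - D * D = q ^ 2 * h ^ 2).
  { unfold dh, D. rewrite Dh_sq, Dd_sq by lra. ring. }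
  replace (1 / dh - 1 / D) with (- ((dh * dh - D * D) / (dh * D * (dh + D)))) by (field; repeat split; lra).
  rewrite Rabs_Ropp, Esq.
  assert (0 < dh * D * (dh + D)) by (apply Rmult_lt_0_compat; [apply Rmult_lt_0_compat|]; lra).
  assert (0 <= q ^ 2 * h ^ 2) by (apply Rmult_le_pos; apply pow_le; lra).
  rewrite Rabs_pos_eq by (apply Rmult_le_pos; [lra|left; apply Rinv_0_lt_compat; lra]).
  unfold Rdiv. apply Rmult_le_compat_l. apply Rmult_le_pos; apply pow_le; lra.
  apply Rinv_le_contravar. apply Rmult_lt_0_compat; [lra| apply pow_lt; lra].
  replace (2 * D ^ 3) with (D * D * (D + D)) by ring. apply Rmult_le_compat; try nra.
Qed.

(** Third-order cancellation: with [y = alpha_plus h],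
    [(y - 2) rho_plus + 2 + y = (y - 2) (e^y - 1 - y - y^2/2) + y^3/2 + (y - 2) (rho_plus - e^y) = O(h^3)]. *)
Lemma rho_plus_numerator h : 0 < h < h_small s mu q ->
  Rabs ((a * h - 2) * rho_plus s mu q h + 2 + a * h) <= Kn * h ^ 3.
Proof.
  intros Hh. destruct (small_h_bounds s mu q Hs Hq h Hh) as [_ [_ [_ [E _]]]].
  pose proof (rho_plus_near_exp s mu q Hs Hq h Hh) as Hra. fold a in Hra, E.
  pose proof (alpha_plus_pos s mu q Hs Hq) as Ha. fold a in Ha.
  pose proof (Ka_nonneg s mu q Hs Hq) as HKa. set (ka := Ka s mu q) in *.
  set (r1 := rho_plus s mu q h) in *. set (y := a * h).
  assert (Hy : 0 <= y <= 1) by (unfold y; split; nra).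
  assert (EN : (y - 2) * r1 + 2 + y = (y - 2) * exp_rem3 y + y ^ 3 / 2 + (y - 2) * (r1 - exp y)).
  { unfold exp_rem3. field. }
  destruct (exp_rem_bounds y ltac:(rewrite Rabs_pos_eq; lra)) as [B3 _].
  rewrite (Rabs_pos_eq y) in B3 by lra.
  rewrite EN. eapply Rle_trans. apply Rabs_triang. eapply Rle_trans. apply Rplus_le_compat_r.
  apply Rabs_triang.
  rewrite !Rabs_mult. rewrite (Rabs_left1 (y - 2)) by lra.
  rewrite (Rabs_pos_eq (y ^ 3 / 2)) by (apply Rmult_le_pos; [apply pow_le|]; lra).
  rewrite Rabs_minus_sym. change (exp y) with (exp (a * h)).
  assert (y ^ 3 = a ^ 3 * h ^ 3) by (unfold y; ring).
  unfold Kn. fold a ka.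
  assert (0 <= h ^ 3) by (apply pow_le; lra). assert (0 <= y ^ 3) by (apply pow_le; lra).
  pose proof (Rabs_pos (exp_rem3 y)).
  assert (- (y - 2) * Rabs (exp_rem3 y) <= 2 * (3 * y ^ 3)) by nra.
  assert (- (y - 2) * Rabs (exp (a * h) - r1) <= 2 * (ka * h ^ 3)).
  { pose proof (Rabs_pos (exp (a * h) - r1)). apply Rmult_le_compat; lra. }
  nra.
Qed.

Lemma rho_plus_ratio h : 0 < h < h_small s mu q ->
  Rabs (h * rho_plus s mu q h / (rho_plus s mu q h - 1) - 1 / a - h / 2)
  <= 3 * s * Kn / (2 * a * (D - mu)) * h ^ 2.
Proof.
  intros Hh. pose proof (rho_plus_numerator h Hh) as HN.
  pose proof (rho_plus_minus_one s mu q Hs Hq h Hh) as Hr1. fold D in Hr1.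
  pose proof (Dd_gt_mu s mu q Hs Hq) as HDm. fold D in HDm. pose proof (Rle_abs mu).
  pose proof (alpha_plus_pos s mu q Hs Hq) as Ha. fold a in Ha.
  set (r1 := rho_plus s mu q h) in *.
  assert (Hr1p : 0 < h * (D - mu) / (3 * s)) by (apply Rdiv_lt_0_compat; nra).
  replace (h * r1 / (r1 - 1) - 1 / a - h / 2)
    with (((a * h - 2) * r1 + 2 + a * h) / (2 * a * (r1 - 1))) by (field; lra).
  unfold Rdiv at 1. rewrite Rabs_mult, (Rabs_pos_eq (/ _)) by (left; apply Rinv_0_lt_compat; nra).
  apply Rle_trans with (Kn * h ^ 3 * / (2 * a * (h * (D - mu) / (3 * s)))).
  - apply Rmult_le_compat; auto. apply Rabs_pos. left; apply Rinv_0_lt_compat; nra.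
    apply Rinv_le_contravar. apply Rmult_lt_0_compat. lra. exact Hr1p. nra.
  - right. field. repeat split; lra.
Qed.

Lemma v1_expansion h : 0 < h < h_small s mu q -> Rabs (v1 h - u1 - h / (2 * D)) <= Kdel * h ^ 2.
Proof.
  intros Hh. pose proof (rho_plus_ratio h Hh) as HA. pose proof (Dh_inv_near h (proj1 Hh)) as HDd.
  destruct (small_h_bounds s mu q Hs Hq h Hh) as [A _].
  pose proof (rho_plus_minus_one s mu q Hs Hq h Hh) as HR1.
  pose proof (Dd_gt_mu s mu q Hs Hq) as HDm. fold D in HDm, HR1. pose proof (Rle_abs mu).
  pose proof (alpha_plus_pos s mu q Hs Hq) as Ha. fold a in Ha.
  assert (HD : 0 < D) by (apply Dd_pos; auto).
  assert (Hdh : 0 < Dh s mu q h) by (apply Dh_pos; lra).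
  assert (HdD : D <= Dh s mu q h) by apply Dh_ge_D.
  assert (0 < h * (D - mu) / (3 * s)) by (apply Rdiv_lt_0_compat; nra).
  pose proof (Ka_nonneg s mu q Hs Hq) as HKa.
  set (r1 := rho_plus s mu q h) in *. set (dh := Dh s mu q h) in *.
  replace (v1 h - u1 - h / (2 * D))
    with ((h * r1 / (r1 - 1) - 1 / a - h / 2) / dh + (1 / a + h / 2) * (1 / dh - 1 / D)).
  2:{ unfold v1, u1. fold a D r1 dh. field. repeat split; lra. }
  eapply Rle_trans. apply Rabs_triang. unfold Rdiv at 1. rewrite !Rabs_mult.
  rewrite (Rabs_pos_eq (/ dh)) by (left; apply Rinv_0_lt_compat; lra).
  assert (0 < 1 / a) by (apply Rdiv_lt_0_compat; lra).
  rewrite (Rabs_pos_eq (1 / a + h / 2)) by lra.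
  unfold Kdel. fold a D.
  assert (/ dh <= / D) by (apply Rinv_le_contravar; lra).
  assert (0 <= 3 * s * Kn / (2 * a * (D - mu))).
  { unfold Kn. fold a. apply Rmult_le_pos. assert (0 <= a ^ 3) by (apply pow_le; lra). nra.
    left; apply Rinv_0_lt_compat; nra. }
  assert (0 <= q ^ 2 * h ^ 2 / (2 * D ^ 3))
    by (apply Rmult_le_pos; [apply Rmult_le_pos; apply pow_le; lra|
        left; apply Rinv_0_lt_compat; apply Rmult_lt_0_compat; [lra|apply pow_lt; lra]]).
  rewrite (Rmult_plus_distr_r _ _ (h ^ 2)). apply Rplus_le_compat.
  - apply Rle_trans with (3 * s * Kn / (2 * a * (D - mu)) * h ^ 2 * / D).
    apply Rmult_le_compat; auto using Rabs_pos. left; apply Rinv_0_lt_compat; lra.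
    right. field. lra.
  - apply Rle_trans with ((1 / a + 1 / 2) * (q ^ 2 * h ^ 2 / (2 * D ^ 3))).
    apply Rmult_le_compat; auto using Rabs_pos; lra.
    right. field. lra.
Qed.

Lemma Kdel_nonneg : 0 <= Kdel.
Proof.
  pose proof (alpha_plus_pos s mu q Hs Hq) as Ha. pose proof (Dd_gt_mu s mu q Hs Hq) as HDm.
  pose proof (Dd_pos s mu q Hs Hq) as HD. pose proof (Ka_nonneg s mu q Hs Hq) as HKa.
  pose proof (Rle_abs mu).
  assert (HKn : 0 <= Kn) by (unfold Kn; assert (0 <= alpha_plus s mu q ^ 3) by (apply pow_le; lra); lra).
  unfold Kdel. apply Rplus_le_le_0_compat.
  - apply Rmult_le_pos; [| left; apply Rinv_0_lt_compat; lra].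
    apply Rmult_le_pos; [nra | left; apply Rinv_0_lt_compat; nra].
  - assert (0 < 1 / alpha_plus s mu q) by (apply Rdiv_lt_0_compat; lra).
    apply Rmult_le_pos; [apply Rmult_le_pos; [lra | apply pow_le; lra] |].
    left; apply Rinv_0_lt_compat. assert (0 < Dd s mu q ^ 3) by (apply pow_lt; lra). lra.
Qed.

Definition DeltaZ_closed h (k : nat) :=
  q * (u1 * exp (alpha_plus s mu q * (INR k * h)) - u2 * exp (alpha_minus s mu q * (INR k * h))
       - v1 h * rho_plus s mu q h ^ k + v2 h * rho_minus s mu q h ^ k).
End Coefficients.

Lemma pow_diff A B M k : 1 <= M -> 0 <= A <= M -> 0 <= B <= M ->
  Rabs (A ^ k - B ^ k) <= INR k * Rabs (A - B) * M ^ k.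
Proof.
  intros HM HA HB. induction k.
  - simpl. rewrite Rminus_diag, Rabs_R0. lra.
  - replace (A ^ S k - B ^ S k) with (A * (A ^ k - B ^ k) + B ^ k * (A - B)) by (simpl; ring).
    eapply Rle_trans. apply Rabs_triang. rewrite !Rabs_mult.
    rewrite (Rabs_pos_eq A), (Rabs_pos_eq (B ^ k)) by (try lra; apply pow_le; lra).
    assert (B ^ k <= M ^ k) by (apply pow_incr; lra).
    assert (M ^ k <= M ^ S k) by (simpl; assert (0 <= M ^ k) by (apply pow_le; lra); nra).
    assert (0 <= M ^ k) by (apply pow_le; lra).
    pose proof (Rabs_pos (A - B)). pose proof (Rabs_pos (A ^ k - B ^ k)). pose proof (pos_INR k).
    rewrite S_INR. simpl (M ^ S k) in *.
    assert (A * Rabs (A ^ k - B ^ k) <= M * (INR k * Rabs (A - B) * M ^ k)) by (apply Rmult_le_compat; lra).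
    assert (B ^ k * Rabs (A - B) <= M * M ^ k * Rabs (A - B)) by (apply Rmult_le_compat_r; lra).
    nra.
Qed.


Lemma pow_perturbation E r B d (k : nat) : 1 <= B -> 0 <= E <= B -> 0 <= r ->
  Rabs (E - r) <= d -> Rabs (E ^ k - r ^ k) <= INR k * d * (B ^ k * exp (INR k * d)).
Proof.
  intros HB HE Hr Hd.
  assert (Hd0 : 0 <= d) by (pose proof (Rabs_pos (E - r)); lra).
  assert (HM : 1 <= B * (1 + d)) by nra.
  assert (r <= B * (1 + d)) by (pose proof (Rle_abs (r - E)); rewrite Rabs_minus_sym in Hd; nra).
  eapply Rle_trans. apply (pow_diff E r (B * (1 + d)) k); [exact HM | nra | lra].
  rewrite Rpow_mult_distr.
  assert (0 <= B ^ k) by (apply pow_le; lra).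
  pose proof (pow_exp_bound d k Hd0).
  assert (0 <= INR k * Rabs (E - r)) by (apply Rmult_le_pos; [apply pos_INR | apply Rabs_pos]).
  assert (0 <= (1 + d) ^ k) by (apply pow_le; lra).
  apply Rmult_le_compat.
  - exact H2.
  - apply Rmult_le_pos; lra.
  - apply Rmult_le_compat_l; [apply pos_INR | exact Hd].
  - apply Rmult_le_compat_l; lra.
Qed.

Section ClosedFormExpansion.
Variables s mu q : R.
Hypothesis Hs : 0 < s.
Hypothesis Hq : 0 < q.
Let a := alpha_plus s mu q.
Let b := alpha_minus s mu q.
Let D := Dd s mu q.

Lemma rho_plus_pow_near h (k : nat) : 0 < h < h_small s mu q -> INR k * h * h ^ 2 <= 1 ->
  Rabs (exp (a * (INR k * h)) - rho_plus s mu q h ^ k)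
  <= Ka s mu q * exp (Ka s mu q) * (INR k * h * h ^ 2) * exp (a * (INR k * h)).
Proof.
  intros Hh Hk. destruct (small_h_bounds s mu q Hs Hq h Hh) as [_ [[Hp _] _]].
  pose proof (rho_plus_near_exp s mu q Hs Hq h Hh) as Hr. fold a in Hr.
  pose proof (Ka_nonneg s mu q Hs Hq) as HKa.
  assert (Hr1 : 1 < rho_plus s mu q h) by (apply rho_plus_gt1; lra).
  assert (HE : 1 <= exp (a * h))
    by (rewrite <- exp_0; apply exp_le; pose proof (alpha_plus_pos s mu q Hs Hq); fold a in H; nra).
  replace (a * (INR k * h)) with (INR k * (a * h)) by ring. rewrite <- exp_powR.
  eapply Rle_trans. apply (pow_perturbation _ _ (exp (a * h)) (Ka s mu q * h ^ 3) k); lra.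
  set (t := INR k * h * h ^ 2) in *.
  assert (Ht : 0 <= t)
    by (unfold t; apply Rmult_le_pos; [apply Rmult_le_pos; [apply pos_INR | lra] | apply pow_le; lra]).
  replace (INR k * (Ka s mu q * h ^ 3)) with (Ka s mu q * t) by (unfold t; ring).
  assert (exp (Ka s mu q * t) <= exp (Ka s mu q)) by (apply exp_le; nra).
  assert (0 <= Ka s mu q * t * exp (a * h) ^ k) by (apply Rmult_le_pos; [nra | apply pow_le; lra]).
  nra.
Qed.

Lemma rho_minus_pow_near h (k : nat) : 0 < h < h_small s mu q -> INR k * h * h ^ 2 <= 1 ->
  Rabs (exp (b * (INR k * h)) - rho_minus s mu q h ^ k)
  <= Kb s mu q * exp (Kb s mu q) * (INR k * h * h ^ 2).
Proof.
  intros Hh Hk. destruct (small_h_bounds s mu q Hs Hq h Hh) as [_ [[Hp _] [[Hm _] _]]].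
  pose proof (rho_minus_near_exp s mu q Hs Hq h Hh) as Hr. fold b in Hr.
  pose proof (Kb_nonneg s mu q Hs Hq) as HKb.
  assert (Hr2 : 0 < rho_minus s mu q h) by (apply rho_minus_pos; lra).
  assert (HE : exp (b * h) <= 1)
    by (rewrite <- exp_0; apply exp_le; pose proof (alpha_minus_neg s mu q Hs Hq); fold b in H; nra).
  pose proof (exp_pos (b * h)).
  replace (b * (INR k * h)) with (INR k * (b * h)) by ring. rewrite <- exp_powR.
  eapply Rle_trans. apply (pow_perturbation _ _ 1 (Kb s mu q * h ^ 3) k); lra.
  rewrite pow1, Rmult_1_l.
  set (t := INR k * h * h ^ 2) in *.
  assert (Ht : 0 <= t)
    by (unfold t; apply Rmult_le_pos; [apply Rmult_le_pos; [apply pos_INR | lra] | apply pow_le; lra]).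
  replace (INR k * (Kb s mu q * h ^ 3)) with (Kb s mu q * t) by (unfold t; ring).
  assert (exp (Kb s mu q * t) <= exp (Kb s mu q)) by (apply exp_le; nra).
  assert (0 <= Kb s mu q * t) by nra.
  nra.
Qed.

(** Algebraic splitting of the error into the root errors [ea - p1], [eb - p2],
    the coefficient error [v1 - u1 - c] and the first-order term [c]. *)
Lemma closed_form_error_identity u1 u2 v1 v2 ea eb p1 p2 c : v2 - u2 = v1 - u1 ->
  u1 * ea - u2 * eb - v1 * p1 + v2 * p2 + c * (ea - eb)
  = u1 * (ea - p1) - u2 * (eb - p2) - (v1 - u1 - c) * (p1 - p2) - c * ((eb - p2) - (ea - p1)).
Proof. intros H. replace v2 with (v1 - u1 + u2) by lra. ring. Qed.

Let e1 := Ka s mu q * exp (Ka s mu q).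
Let e2 := Kb s mu q * exp (Kb s mu q).

Lemma root_error_consts_nonneg : 0 <= e1 /\ 0 <= e2.
Proof.
  pose proof (Ka_nonneg s mu q Hs Hq). pose proof (Kb_nonneg s mu q Hs Hq).
  pose proof (exp_pos (Ka s mu q)). pose proof (exp_pos (Kb s mu q)).
  unfold e1, e2. split; apply Rmult_le_pos; lra.
Qed.

Lemma root_powers_gap h (k : nat) : 0 < h < h_small s mu q -> INR k * h * h ^ 2 <= 1 ->
  Rabs (rho_plus s mu q h ^ k - rho_minus s mu q h ^ k) <= (1 + e1 + e2) * exp (a * (INR k * h)).
Proof.
  intros Hh Hk.
  pose proof (rho_plus_pow_near h k Hh Hk) as HX1. pose proof (rho_minus_pow_near h k Hh Hk) as HX2.
  fold e1 in HX1. fold e2 in HX2. destruct root_error_consts_nonneg as [He1 He2].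
  set (x := INR k * h) in *. set (ea := exp (a * x)) in *. set (eb := exp (b * x)) in *.
  assert (Hx : 0 <= x) by (unfold x; pose proof (pos_INR k); nra).
  assert (Heab : 0 < eb <= ea)
    by (unfold ea, eb; split; [apply exp_pos | apply exp_le; pose proof (alpha_plus_pos s mu q Hs Hq);
        pose proof (alpha_minus_neg s mu q Hs Hq); fold a b in H, H0; nra]).
  assert (Hea : 1 <= ea)
    by (unfold ea; rewrite <- exp_0; apply exp_le; pose proof (alpha_plus_pos s mu q Hs Hq); fold a in H; nra).
  replace (rho_plus s mu q h ^ k - rho_minus s mu q h ^ k)
    with ((ea - eb) - (ea - rho_plus s mu q h ^ k) + (eb - rho_minus s mu q h ^ k)) by ring.
  eapply Rle_trans. apply Rabs_triang. eapply Rle_trans. apply Rplus_le_compat_r. apply Rabs_triang.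
  rewrite Rabs_Ropp, (Rabs_pos_eq (ea - eb)) by lra.
  assert (e1 * (x * h ^ 2) * ea <= e1 * ea) by (apply Rmult_le_compat_r; [lra|]; nra).
  assert (e2 * (x * h ^ 2) <= e2 * ea) by nra. nra.
Qed.

Definition K_closed := q * (Rabs (u1 s mu q) * e1 + Rabs (u2 s mu q) * e2
                            + Kdel s mu q * (1 + e1 + e2) + (e1 + e2) / (2 * D)).

Lemma K_closed_nonneg : 0 <= K_closed.
Proof.
  destruct root_error_consts_nonneg as [He1 He2]. pose proof (Kdel_nonneg s mu q Hs Hq).
  pose proof (Dd_pos s mu q Hs Hq) as HD. fold D in HD.
  pose proof (Rabs_pos (u1 s mu q)). pose proof (Rabs_pos (u2 s mu q)).
  assert (0 < / (2 * D)) by (apply Rinv_0_lt_compat; lra).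
  unfold K_closed, Rdiv. apply Rmult_le_pos. lra.
  assert (0 <= Kdel s mu q * (1 + e1 + e2)) by nra. nra.
Qed.

Lemma closed_form_expansion h (k : nat) : 0 < h < h_small s mu q -> INR k * h * h ^ 2 <= 1 ->
  Rabs (DeltaZ_closed s mu q h k + q * h * (exp (a * (INR k * h)) - exp (b * (INR k * h))) / (2 * D))
  <= K_closed * (h ^ 2 * (1 + INR k * h) * exp (a * (INR k * h))).
Proof.
  intros Hh Hk. unfold DeltaZ_closed. fold a b.
  pose proof (Dd_pos s mu q Hs Hq) as HD. fold D in HD.
  destruct root_error_consts_nonneg as [He1 He2]. pose proof (Kdel_nonneg s mu q Hs Hq) as HKd.
  pose proof (rho_plus_pow_near h k Hh Hk) as HX1. pose proof (rho_minus_pow_near h k Hh Hk) as HX2.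
  pose proof (root_powers_gap h k Hh Hk) as HY. fold e1 in HX1. fold e2 in HX2.
  pose proof (v1_expansion s mu q Hs Hq h Hh) as Hdel. fold D in Hdel.
  assert (Hdl2 : v2 s mu q h - u2 s mu q = v1 s mu q h - u1 s mu q).
  { pose proof (u_diff s mu q Hs Hq). pose proof (v_diff s mu q Hs Hq h Hh). lra. }
  assert (Hh1 : h <= 1) by apply (small_h_bounds s mu q Hs Hq h Hh).
  set (x := INR k * h) in *.
  assert (Hx : 0 <= x) by (unfold x; pose proof (pos_INR k); nra).
  assert (Hh2 : 0 <= h ^ 2) by (apply pow_le; lra).
  set (ea := exp (a * x)) in *. set (eb := exp (b * x)) in *.
  assert (Hea : 1 <= ea)
    by (unfold ea; rewrite <- exp_0; apply exp_le; pose proof (alpha_plus_pos s mu q Hs Hq); fold a in H; nra).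
  set (P := h ^ 2 * (1 + x) * ea).
  assert (Hhe : 0 <= h ^ 2 * ea) by (apply Rmult_le_pos; lra).
  assert (0 <= x * (h ^ 2 * ea)) by (apply Rmult_le_pos; lra).
  assert (HxP : x * h ^ 2 <= P) by (assert (x * h ^ 2 <= x * h ^ 2 * ea) by nra; unfold P; lra).
  assert (T1 : Rabs (ea - rho_plus s mu q h ^ k) <= e1 * P)
    by (eapply Rle_trans; [exact HX1 | unfold P; rewrite Rmult_assoc; apply Rmult_le_compat_l; lra]).
  assert (T2 : Rabs (eb - rho_minus s mu q h ^ k) <= e2 * P)
    by (eapply Rle_trans; [exact HX2 | apply Rmult_le_compat_l; lra]).
  assert (T3 : Rabs (v1 s mu q h - u1 s mu q - h / (2 * D))
               * Rabs (rho_plus s mu q h ^ k - rho_minus s mu q h ^ k) <= Kdel s mu q * (1 + e1 + e2) * P).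
  { apply Rle_trans with (Kdel s mu q * h ^ 2 * ((1 + e1 + e2) * ea)).
    apply Rmult_le_compat; auto using Rabs_pos.
    unfold P. apply Rle_trans with (Kdel s mu q * (1 + e1 + e2) * (h ^ 2 * ea)); [right; ring |].
    apply Rmult_le_compat_l; [nra | lra]. }
  assert (T4 : h / (2 * D) * Rabs (eb - rho_minus s mu q h ^ k - (ea - rho_plus s mu q h ^ k))
               <= (e1 + e2) / (2 * D) * P).
  { assert (Rabs (eb - rho_minus s mu q h ^ k - (ea - rho_plus s mu q h ^ k)) <= (e1 + e2) * P)
      by (eapply Rle_trans; [apply Rabs_triang | rewrite Rabs_Ropp; lra]).
    assert (0 < / (2 * D)) by (apply Rinv_0_lt_compat; lra). assert (0 <= (e1 + e2) * P) by (unfold P; nra).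
    unfold Rdiv. apply Rle_trans with (1 * / (2 * D) * ((e1 + e2) * P)); [| right; ring].
    apply Rmult_le_compat; try nra. apply Rabs_pos. }
  replace (q * (u1 s mu q * ea - u2 s mu q * eb - v1 s mu q h * rho_plus s mu q h ^ k
                + v2 s mu q h * rho_minus s mu q h ^ k) + q * h * (ea - eb) / (2 * D))
    with (q * (u1 s mu q * ea - u2 s mu q * eb - v1 s mu q h * rho_plus s mu q h ^ k
               + v2 s mu q h * rho_minus s mu q h ^ k + h / (2 * D) * (ea - eb))) by (field; lra).
  rewrite closed_form_error_identity by exact Hdl2.
  rewrite Rabs_mult, (Rabs_pos_eq q) by lra. unfold K_closed. rewrite Rmult_assoc.
  apply Rmult_le_compat_l. lra.
  eapply Rle_trans. apply abs_four_terms. rewrite !Rabs_mult.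
  rewrite (Rabs_pos_eq (h / (2 * D))) by (unfold Rdiv; apply Rmult_le_pos; [lra | left; apply Rinv_0_lt_compat; lra]).
  pose proof (Rabs_pos (u1 s mu q)). pose proof (Rabs_pos (u2 s mu q)).
  assert (Rabs (u1 s mu q) * Rabs (ea - rho_plus s mu q h ^ k) <= Rabs (u1 s mu q) * e1 * P)
    by (rewrite Rmult_assoc; apply Rmult_le_compat_l; lra).
  assert (Rabs (u2 s mu q) * Rabs (eb - rho_minus s mu q h ^ k) <= Rabs (u2 s mu q) * e2 * P)
    by (rewrite Rmult_assoc; apply Rmult_le_compat_l; lra).
  lra.
Qed.
End ClosedFormExpansion.

Lemma scale_Wh_integral s mu q h Wh (k : nat) : 0 < s -> 0 < q ->
  0 < h < h_small s mu q -> is_scale_Wh s mu q h Wh ->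
  Rint Wh 0 (INR k * h) =
  v1 s mu q h * rho_plus s mu q h ^ k - v2 s mu q h * rho_minus s mu q h ^ k
  - (v1 s mu q h - v2 s mu q h).
Proof.
  intros Hs Hq Hh HWh.
  destruct (small_h_bounds s mu q Hs Hq h Hh) as [_ [[Hp _] [[Hm _] _]]].
  pose proof HWh as [_ [Hstep _]].
  destruct (step_integral h Wh (proj1 Hh) Hstep (fun _ => 1) k (C0_const 1)) as [Hex Hint].
  assert (Hex' : ex_RInt Wh 0 (INR k * h)).
  { apply (ex_RInt_ext (V:=R_NormedModule) (fun y => 1 * Wh y)); auto. intros; toR; ring. }
  rewrite Rint_eq_RInt by exact Hex'.
  rewrite (RInt_extR Wh (fun y => 1 * Wh y)) by (intros; ring). rewrite Hint.
  rewrite (sumN_ext _ (fun j => h * Wh_closed s mu q h j)).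
  2:{ intros j _. rewrite (Wh_explicit s mu q h Wh) by (auto; lra). rewrite RInt_constR. ring. }
  rewrite sumN_scal.
  assert (Hr1 : 1 < rho_plus s mu q h) by (apply rho_plus_gt1; lra).
  assert (Hr2 : 0 < rho_minus s mu q h) by (apply rho_minus_pos; lra).
  assert (Hr2' : rho_minus s mu q h < 1).
  { pose proof (one_minus_rho_minus s mu q Hs Hq h Hh). pose proof (Dd_gt_mu s mu q Hs Hq).
    pose proof (Rle_abs (- mu)). rewrite Rabs_Ropp in H1.
    assert (0 < h * (Dd s mu q + mu) / (3 * s)) by (apply Rdiv_lt_0_compat; nra). lra. }
  assert (Hdh : 0 < Dh s mu q h) by (apply Dh_pos; lra).
  rewrite (sumN_ext _ (fun j => / Dh s mu q h * (rho_plus s mu q h * rho_plus s mu q h ^ j)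
                       + (- / Dh s mu q h) * (rho_minus s mu q h * rho_minus s mu q h ^ j))).
  2:{ intros j _. unfold Wh_closed. simpl. field. lra. }
  rewrite sumN_plus, !sumN_scal, !sumN_geom by lra.
  unfold v1, v2. field. repeat split; lra.
Qed.

Lemma DeltaZ_closed_form s mu q W Wh h (k : nat) : 0 < s -> 0 < q -> is_scale_W s mu q W ->
  0 < h < h_small s mu q -> is_scale_Wh s mu q h Wh ->
  DeltaZ q W Wh (INR k * h) h = DeltaZ_closed s mu q h k.
Proof.
  intros Hs Hq HW Hh HWh.
  assert (Hx : 0 <= INR k * h) by (pose proof (pos_INR k); nra).
  unfold DeltaZ, Zq, Zqh, DeltaZ_closed.
  replace (INR k * h / h) with (INR k) by (field; lra). rewrite Int_part_INR, <- INR_IZR_INZ.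
  rewrite (scale_W_integral s mu q W Hs Hq HW _ Hx), (scale_Wh_integral s mu q h Wh k Hs Hq Hh HWh).
  pose proof (u_diff s mu q Hs Hq) as Hu. pose proof (v_diff s mu q Hs Hq h Hh) as Hv.
  pose proof (alpha_plus_pos s mu q Hs Hq). pose proof (alpha_minus_neg s mu q Hs Hq).
  pose proof (Dd_pos s mu q Hs Hq).
  replace (((exp (alpha_plus s mu q * (INR k * h)) - 1) / alpha_plus s mu q -
      (exp (alpha_minus s mu q * (INR k * h)) - 1) / alpha_minus s mu q) / Dd s mu q)
    with (u1 s mu q * exp (alpha_plus s mu q * (INR k * h))
          - u2 s mu q * exp (alpha_minus s mu q * (INR k * h)) - (u1 s mu q - u2 s mu q))
    by (unfold u1, u2; field; repeat split; lra).
  rewrite Hu, Hv. field. lra.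
Qed.

Lemma DeltaZ_expansion s mu q W : 0 < s -> 0 < q -> is_scale_W s mu q W ->
  exists Km, 0 <= Km /\ forall h Wh (k : nat), 0 < h < h_small s mu q -> is_scale_Wh s mu q h Wh ->
  INR k * h * h ^ 2 <= 1 ->
  Rabs (DeltaZ q W Wh (INR k * h) h
        + q * h * (exp (alpha_plus s mu q * (INR k * h)) - exp (alpha_minus s mu q * (INR k * h)))
          / (2 * Dd s mu q))
  <= Km * (h ^ 2 * (1 + INR k * h) * exp (alpha_plus s mu q * (INR k * h))).
Proof.
  intros Hs Hq HW. exists (K_closed s mu q). split; [apply K_closed_nonneg; auto |].
  intros h Wh k Hh HWh Hk.
  rewrite (DeltaZ_closed_form s mu q W Wh h k Hs Hq HW Hh HWh). apply closed_form_expansion; auto.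
Qed.

Lemma DeltaZ_error_bound s mu q W : 0 < s -> 0 < q -> is_scale_W s mu q W ->
  exists A0 h0, 0 < A0 /\ 0 < h0 /\
     forall (h : R) (Wh : R -> R), 0 < h < h0 -> is_scale_Wh s mu q h Wh ->
     forall k : nat, INR k * h * h ^ 2 <= 1 ->
       Rabs (DeltaZ q W Wh (INR k * h) h) <=
       A0 * (h ^ 2 * (1 + INR k * h) * exp (alpha_plus s mu q * (INR k * h))
             + h * (exp (alpha_plus s mu q * (INR k * h)) - exp (alpha_minus s mu q * (INR k * h)))).
Proof.
  intros Hs Hq HW. destruct (DeltaZ_expansion s mu q W Hs Hq HW) as [Km [HKm Hm]].
  pose proof (Dd_pos s mu q Hs Hq) as HD.
  set (c := q / (2 * Dd s mu q)).
  assert (Hc : 0 < c) by (apply Rdiv_lt_0_compat; lra).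
  exists (Km + c + 1), (h_small s mu q). split; [lra | split; [apply h_small_pos; auto |]].
  intros h Wh Hh HWh k Hk. specialize (Hm h Wh k Hh HWh Hk).
  set (x := INR k * h) in *.
  assert (Hx : 0 <= x) by (unfold x; pose proof (pos_INR k); nra).
  set (E := exp (alpha_plus s mu q * x) - exp (alpha_minus s mu q * x)) in *.
  assert (HE : 0 <= E).
  { unfold E. pose proof (alpha_plus_pos s mu q Hs Hq). pose proof (alpha_minus_neg s mu q Hs Hq).
    assert (exp (alpha_minus s mu q * x) <= exp (alpha_plus s mu q * x)) by (apply exp_le; nra). lra. }
  set (P := h ^ 2 * (1 + x) * exp (alpha_plus s mu q * x)) in *.
  assert (HP : 0 <= P).
  { unfold P. pose proof (exp_pos (alpha_plus s mu q * x)).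
    assert (0 <= h ^ 2) by (apply pow_le; lra). apply Rmult_le_pos; [apply Rmult_le_pos|]; lra. }
  replace (q * h * E / (2 * Dd s mu q)) with (c * (h * E)) in Hm by (unfold c; field; lra).
  assert (0 <= h * E) by nra.
  pose proof (Rabs_triang (DeltaZ q W Wh x h + c * (h * E)) (- (c * (h * E)))).
  rewrite Rabs_Ropp, (Rabs_pos_eq (c * (h * E))) in H0 by nra.
  replace (DeltaZ q W Wh x h + c * (h * E) + - (c * (h * E))) with (DeltaZ q W Wh x h) in H0 by ring.
  nra.
Qed.

Lemma nested_grid_point (hs : nat -> R) x n0 k0 : (forall n, 0 < hs n) ->
  (forall n, exists m : nat, hs n = INR m * hs (S n)) -> (1 <= k0)%nat -> x = INR k0 * hs n0 ->
  forall d, exists k : nat, (1 <= k)%nat /\ x = INR k * hs (n0 + d)%nat.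
Proof.
  intros Hpos Hnest Hk0 Hx. induction d.
  - exists k0. rewrite Nat.add_0_r. auto.
  - destruct IHd as [k [Hk Hxk]]. destruct (Hnest (n0 + d)%nat) as [m Hm].
    assert (m <> O). { intro. subst. simpl in Hm. pose proof (Hpos (n0 + d)%nat). lra. }
    exists (k * m)%nat. split. lia. rewrite Hxk, Hm, mult_INR, Nat.add_succ_r. ring.
Qed.

Lemma DeltaZ_quotient_bound s mu q W Wh h (k : nat) : 0 < s -> 0 < q -> is_scale_W s mu q W ->
  0 < h < h_small s mu q -> is_scale_Wh s mu q h Wh -> INR k * h * h ^ 2 <= 1 ->
  Rabs (DeltaZ q W Wh (INR k * h) h / h
        - - (1 / 2) * (q / Dd s mu q)
          * (exp (alpha_plus s mu q * (INR k * h)) - exp (alpha_minus s mu q * (INR k * h))))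
  <= h * (K_closed s mu q * (1 + INR k * h) * exp (alpha_plus s mu q * (INR k * h))).
Proof.
  intros Hs Hq HW Hh HWh Hk. pose proof (Dd_pos s mu q Hs Hq) as HD.
  pose proof (closed_form_expansion s mu q Hs Hq h k Hh Hk) as Hm.
  rewrite <- (DeltaZ_closed_form s mu q W Wh h k Hs Hq HW Hh HWh) in Hm.
  set (x := INR k * h) in *.
  set (E := exp (alpha_plus s mu q * x) - exp (alpha_minus s mu q * x)) in *.
  replace (DeltaZ q W Wh x h / h - - (1 / 2) * (q / Dd s mu q) * E)
    with ((DeltaZ q W Wh x h + q * h * E / (2 * Dd s mu q)) / h) by (field; lra).
  unfold Rdiv at 1. rewrite Rabs_mult, (Rabs_pos_eq (/ h)) by (left; apply Rinv_0_lt_compat; lra).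
  apply Rle_trans with (K_closed s mu q * (h ^ 2 * (1 + x) * exp (alpha_plus s mu q * x)) * / h).
  { apply Rmult_le_compat_r; auto. left; apply Rinv_0_lt_compat; lra. }
  right. field. lra.
Qed.

Lemma DeltaZ_first_order s mu q W : 0 < s -> 0 < q -> is_scale_W s mu q W ->
  forall (hs : nat -> R) (Wh : nat -> R -> R),
     (forall n, 0 < hs n) ->
     Un_cv hs 0 ->
     (forall n, exists m : nat, hs n = INR m * hs (S n)) ->
     (exists N, forall n, (N <= n)%nat -> is_scale_Wh s mu q (hs n) (Wh n)) ->
     forall x : R, (exists (n k : nat), (1 <= k)%nat /\ x = INR k * hs n) ->
     Un_cv (fun n => DeltaZ q W (Wh n) x (hs n) / hs n)
       (- (1 / 2) * (q / Dd s mu q)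
        * (exp (alpha_plus s mu q * x) - exp (alpha_minus s mu q * x))).
Proof.
  intros Hs Hq HW hs Wh Hpos Hcv Hnest [N HN] x [n0 [k0 [Hk0 Hx]]] eps Heps.
  pose proof (h_small_pos s mu q Hs Hq) as Hh0. pose proof (K_closed_nonneg s mu q Hs Hq) as HK.
  assert (Hxpos : 0 < x).
  { rewrite Hx. pose proof (Hpos n0). assert (1 <= INR k0) by (apply (le_INR 1); auto). nra. }
  (* the error is at most [h C] with [C] depending only on [x] *)
  set (C := K_closed s mu q * (1 + x) * exp (alpha_plus s mu q * x) + 1).
  assert (HC : 0 < C).
  { unfold C. pose proof (exp_pos (alpha_plus s mu q * x)).
    assert (0 <= K_closed s mu q * (1 + x) * exp (alpha_plus s mu q * x))
      by (apply Rmult_le_pos; [apply Rmult_le_pos|]; lra).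
    lra. }
  set (dlt := Rmin (Rmin (h_small s mu q / 2) (1 / (x + 1))) (eps / C)).
  assert (Hdlt : 0 < dlt) by (unfold dlt; repeat apply Rmin_pos; try apply Rdiv_lt_0_compat; lra).
  destruct (Hcv dlt Hdlt) as [N1 HN1].
  exists (max (max N N1) n0). intros n Hn.
  specialize (HN1 n ltac:(lia)). unfold R_dist in HN1.
  rewrite Rminus_0_r, Rabs_pos_eq in HN1 by (left; apply Hpos).
  set (h := hs n) in *.
  assert (Hhp : 0 < h) by apply Hpos.
  assert (Hh1 : h < h_small s mu q).
  { assert (dlt <= h_small s mu q / 2) by (unfold dlt; eapply Rle_trans; apply Rmin_l). lra. }
  assert (Hh2 : h * (x + 1) < 1).
  { assert (dlt <= 1 / (x + 1)) by (unfold dlt; eapply Rle_trans; [apply Rmin_l|apply Rmin_r]).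
    apply Rmult_lt_reg_r with (/ (x + 1)). apply Rinv_0_lt_compat; lra.
    replace (h * (x + 1) * / (x + 1)) with h by (field; lra). unfold Rdiv in H. lra. }
  assert (Hh3 : h * C < eps).
  { assert (dlt <= eps / C) by apply Rmin_r.
    apply Rmult_lt_reg_r with (/ C). apply Rinv_0_lt_compat; lra.
    replace (h * C * / C) with h by (field; lra). unfold Rdiv in H. lra. }
  destruct (nested_grid_point hs x n0 k0 Hpos Hnest Hk0 Hx (n - n0)) as [k [Hk Hxk]].
  replace (n0 + (n - n0))%nat with n in Hxk by lia. fold h in Hxk.
  assert (Hkh : INR k * h * h ^ 2 <= 1).
  { rewrite <- Hxk. assert (x * h <= 1) by nra. assert (h <= 1) by nra.
    assert (x * h ^ 2 <= x * h) by (simpl; rewrite Rmult_1_r; apply Rmult_le_compat_l; nra). lra. }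
  pose proof (DeltaZ_quotient_bound s mu q W (Wh n) h k Hs Hq HW ltac:(lra) ltac:(apply HN; lia) Hkh)
    as Hq1.
  rewrite <- Hxk in Hq1. unfold R_dist.
  eapply Rle_lt_trans. exact Hq1.
  apply Rle_lt_trans with (h * C); [apply Rmult_le_compat_l; unfold C; lra | exact Hh3].
Qed.

Theorem proposition5p6 (sigma2 mu q : R) (Hs : 0 < sigma2) (Hq : 0 < q)
  (W : R -> R) (HW : is_scale_W sigma2 mu q W) :
  (exists A0 h0, 0 < A0 /\ 0 < h0 /\
     forall (h : R) (Wh : R -> R), 0 < h < h0 -> is_scale_Wh sigma2 mu q h Wh ->
     forall k : nat, (1 <= k)%nat -> INR k * h * h ^ 2 <= 1 ->
       Rabs (DeltaZ q W Wh (INR k * h) h) <=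
       A0 * (h ^ 2 * (1 + INR k * h) * exp (alpha_plus sigma2 mu q * (INR k * h))
             + h * (exp (alpha_plus sigma2 mu q * (INR k * h))
                    - exp (alpha_minus sigma2 mu q * (INR k * h)))))
  /\
  (forall (hs : nat -> R) (Wh : nat -> R -> R),
     (forall n, 0 < hs n) ->
     Un_cv hs 0 ->
     (forall n, exists m : nat, hs n = INR m * hs (S n)) ->
     (exists N, forall n, (N <= n)%nat -> is_scale_Wh sigma2 mu q (hs n) (Wh n)) ->
     forall x : R, (exists (n k : nat), (1 <= k)%nat /\ x = INR k * hs n) ->
     Un_cv (fun n => DeltaZ q W (Wh n) x (hs n) / hs n)
       (- (1 / 2) * (q / sqrt (mu ^ 2 + 2 * sigma2 * q))
        * (exp (alpha_plus sigma2 mu q * x) - exp (alpha_minus sigma2 mu q * x)))).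
Proof.
  split.
  - destruct (DeltaZ_error_bound sigma2 mu q W Hs Hq HW) as [A0 [h0 [HA0 [Hh0 Hbound]]]].
    exists A0, h0. split; [exact HA0 | split; [exact Hh0 |]].
    intros h Wh Hh HWh k _ Hk. exact (Hbound h Wh Hh HWh k Hk).
  - replace (mu ^ 2 + 2 * sigma2 * q) with (mu ^ 2 + 2 * q * sigma2) by ring.
    exact (DeltaZ_first_order sigma2 mu q W Hs Hq HW).
Qed.
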